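(* Let $f:\mathbb N\to(0,\infty)$ satisfy $f(n)\to\infty$. There exists a critical offspring distribution $\mu$ such that \[ \limsup_{n\to\infty}\mathbf P\big(\mathsf{Height}(\mathrm T_n)<f(n)\ln n\big)=1\qquad\text{and}\qquad\limsup_{n\to\infty}\mathbf P\big(\mathsf{Width}(\mathrm T_n)>n/f(n)\big)=1, \] where the limits superior are taken along integers $n$ with $\mathbf P(|\mathrm T|=n)>0$.
   Context: An offspring distribution is a probability measure $\mu=(\mu_k)_{k\ge 0}$ on $\mathbb Z_+$; it is critical if $\sum_k k\mu_k=1$. A $\mu$-Bienaymé tree $\mathrm T=\mathrm T(\mu)$ is the family tree of a Galton–Watson process with offspring distribution $\mu$ started from one individual; $\mathrm T_n$ is $\mathrm T$ conditioned on having exactly $n$ vertices (defined when $\mathbf P(|\mathrm T|=n)>0$). $\mathsf{Height}$ is the maximal distance of a vertex from the root and $\mathsf{Width}$ is the maximal number of vertices at a common distance from the root. *)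

From Stdlib Require Import Reals List Arith ClassicalEpsilon.
Import ListNotations.
Open Scope R_scope.

Inductive ptree : Type := Node : list ptree -> ptree.

Fixpoint tsize (t : ptree) : nat :=
  match t with
  | Node ts => S ((fix ss (l : list ptree) : nat :=
                     match l with [] => O | c :: l' => (tsize c + ss l')%nat end) ts)
  end.

Fixpoint height (t : ptree) : nat :=
  match t with
  | Node ts => (fix hs (l : list ptree) : nat :=
                  match l with [] => O | c :: l' => Nat.max (S (height c)) (hs l') end) ts
  end.

Fixpoint gen (t : ptree) (d : nat) : nat :=
  match t, d with
  | Node _, O => 1%nat
  | Node ts, S d' => (fix gs (l : list ptree) : nat :=
                        match l with [] => O | c :: l' => (gen c d' + gs l')%nat end) ts
  end.

(* Width: maximal number of vertices at a common distance from the root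
   (all generations beyond the height are empty). *)
Definition width (t : ptree) : nat :=
  fold_right Nat.max O (map (gen t) (seq 0 (S (height t)))).

(* Probability that the mu-Bienaymé tree equals the plane tree t:
   product over vertices v of mu(k_v(t)). *)
Fixpoint weight (mu : nat -> R) (t : ptree) : R :=
  match t with
  | Node ts => mu (length ts) *
      (fix ws (l : list ptree) : R :=
         match l with [] => 1 | c :: l' => weight mu c * ws l' end) ts
  end.

(* forests fuel m : all ordered forests (lists of plane trees) with
   exactly m vertices in total (fuel m suffices). *)
Fixpoint forests (fuel m : nat) : list (list ptree) :=
  match fuel with
  | O => match m with O => [[]] | S _ => [] end
  | S fu =>
      match m with
      | O => [[]]
      | S _ =>
          flat_map (fun k =>
            flat_map (fun f => map (fun r => Node f :: r) (forests fu (m - k)))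
                     (forests fu (k - 1)))
            (seq 1 m)
      end
  end.

Definition trees (n : nat) : list ptree :=
  match n with O => [] | S m => map Node (forests m m) end.

Definition Psize (mu : nat -> R) (n : nat) : R :=
  fold_right Rplus 0 (map (weight mu) (trees n)).

(* P(T_n satisfies A) = P(|T| = n and A(T)) / P(|T| = n) *)
Definition Pcond (mu : nat -> R) (n : nat) (A : ptree -> Prop) : R :=
  fold_right Rplus 0
    (map (fun t => if excluded_middle_informative (A t) then weight mu t else 0)
         (trees n)) / Psize mu n.

Definition critical_offspring (mu : nat -> R) : Prop :=
  (forall k, 0 <= mu k) /\ infinite_sum mu 1 /\
  infinite_sum (fun k => INR k * mu k) 1.

(* limsup_{n -> oo, P(|T|=n)>0} P(T_n satisfies A n) = 1.
   Since these probabilities are <= 1, this means: infinitely many admissible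
   n, and for every eps > 0 and N there is an admissible n >= N with
   probability > 1 - eps. *)
Definition limsup_one (mu : nat -> R) (A : nat -> ptree -> Prop) : Prop :=
  (forall N, exists n, (N <= n)%nat /\ 0 < Psize mu n) /\
  (forall eps, 0 < eps -> forall N, exists n,
      (N <= n)%nat /\ 0 < Psize mu n /\ 1 - eps < Pcond mu n (A n)).

(* The distribution [mu] puts mass [2^-(i+1) / K_i] on a very sparse sequence of atoms
   [K_0 < K_1 < ...] and the remaining mass at 0, so that its mean is 1.  A tree with
   [n] vertices, [K_j < n <= K_(j+1)], only uses outdegrees below [n], i.e. the atoms
   up to [K_j], whose mean is [1 - 2^-(j+1)]: under this subcritical law generation
   [f(n) ln n] is empty except with probability [O(n^-4)], while a root with [K_j]
   children shows that [P(|T| = n) >= c_j] for some [n] in a window [(K_j, C_j K_j]].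
   In that window [n / f(n) < K_j], and a tree of width below [n / f(n)] only uses
   the atoms below [K_j] and the mass at 0; its probability is exponentially small in
   [n] by a generating-function bound.  Choosing each [K_j] large enough given
   [K_0, ..., K_(j-1)] makes both conditional probabilities [>= 1 - 1/(j+1)]. *)

From Pilot Require Import Defs.
From Stdlib Require Import Reals List Arith Lia Lra ZArith ClassicalEpsilon.
Import ListNotations.
Open Scope R_scope.

(** * Plane trees *)

Definition ptree_nested_ind (P : ptree -> Prop)
  (IH : forall ts, Forall P ts -> P (Node ts)) : forall t, P t :=
  fix F t := match t with Node ts => IH ts
    ((fix G l := match l return Forall P l with
       | [] => Forall_nil _ | c :: l' => Forall_cons c (F c) (G l') end) ts) end.

Fixpoint forest_size (ts : list ptree) : nat :=
  match ts with [] => O | c :: ts' => (tsize c + forest_size ts')%nat end.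
Fixpoint forest_height (ts : list ptree) : nat :=
  match ts with [] => O | c :: ts' => Nat.max (S (height c)) (forest_height ts') end.
Fixpoint forest_gen (ts : list ptree) (d : nat) : nat :=
  match ts with [] => O | c :: ts' => (gen c d + forest_gen ts' d)%nat end.
Fixpoint forest_weight (mu : nat -> R) (ts : list ptree) : R :=
  match ts with [] => 1 | c :: ts' => weight mu c * forest_weight mu ts' end.

Fixpoint max_outdeg (t : ptree) : nat :=
  match t with Node ts => Nat.max (length ts)
    ((fix md (l : list ptree) : nat :=
        match l with [] => O | c :: l' => Nat.max (max_outdeg c) (md l') end) ts) end.
Fixpoint forest_max_outdeg (ts : list ptree) : nat :=
  match ts with [] => O | c :: ts' => Nat.max (max_outdeg c) (forest_max_outdeg ts') end.

Lemma tsize_Node ts : tsize (Node ts) = S (forest_size ts).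
Proof. simpl; induction ts as [|c ts IH]; simpl; rewrite ?IH; reflexivity. Qed.

Lemma height_Node ts : height (Node ts) = forest_height ts.
Proof. simpl; induction ts as [|c ts IH]; simpl; rewrite ?IH; reflexivity. Qed.

Lemma gen_Node_S ts d : gen (Node ts) (S d) = forest_gen ts d.
Proof. simpl; induction ts as [|c ts IH]; simpl; rewrite ?IH; reflexivity. Qed.

Lemma weight_Node mu ts : weight mu (Node ts) = mu (length ts) * forest_weight mu ts.
Proof. simpl; f_equal; induction ts as [|c ts IH]; simpl; rewrite ?IH; reflexivity. Qed.

Lemma max_outdeg_Node ts :
  max_outdeg (Node ts) = Nat.max (length ts) (forest_max_outdeg ts).
Proof. simpl; induction ts as [|c ts IH]; simpl; rewrite ?IH; reflexivity. Qed.

Lemma tsize_pos t : (1 <= tsize t)%nat.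
Proof. destruct t; rewrite tsize_Node; lia. Qed.

Lemma length_le_forest_size ts : (length ts <= forest_size ts)%nat.
Proof. induction ts as [|c ts IH]; cbn [length forest_size]; [|pose proof (tsize_pos c)]; lia. Qed.

Lemma height_lt_tsize t : (height t < tsize t)%nat.
Proof.
  induction t as [ts IH] using ptree_nested_ind.
  rewrite height_Node, tsize_Node.
  induction IH; cbn [forest_height forest_size]; lia.
Qed.

Lemma max_outdeg_lt_tsize t : (max_outdeg t < tsize t)%nat.
Proof.
  induction t as [ts IH] using ptree_nested_ind.
  rewrite max_outdeg_Node, tsize_Node.
  enough (forest_max_outdeg ts <= forest_size ts)%nat
    by (pose proof (length_le_forest_size ts); lia).
  induction IH; cbn [forest_max_outdeg forest_size]; lia.
Qed.

Lemma gen_pos_iff t d : (0 < gen t d)%nat <-> (d <= height t)%nat.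
Proof.
  revert d; induction t as [ts IH] using ptree_nested_ind; intros [|d]; [simpl; lia|].
  rewrite gen_Node_S, height_Node.
  induction IH as [|c ts Hc IHts]; cbn [forest_gen forest_height]; [lia|].
  specialize (Hc d); lia.
Qed.

Lemma gen_le_width t d : (gen t d <= width t)%nat.
Proof.
  destruct (Nat.eq_dec (gen t d) 0) as [->|Hd]; [lia|].
  assert (Hdh : (d <= height t)%nat) by (apply gen_pos_iff; lia).
  pose proof (proj1 (list_max_le _ _) (le_n (width t))) as Hall.
  rewrite Forall_forall in Hall; apply Hall.
  apply in_map, in_seq; lia.
Qed.

Lemma max_outdeg_le_gen t : exists d, (max_outdeg t <= gen t d)%nat.
Proof.
  induction t as [ts IH] using ptree_nested_ind; rewrite max_outdeg_Node.
  assert (Hroot : (length ts <= gen (Node ts) 1)%nat).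
  { rewrite gen_Node_S; clear IH.
    induction ts as [|[ ] ts IHts]; cbn [forest_gen length]; simpl gen; lia. }
  assert (Hsub : exists d, (forest_max_outdeg ts <= gen (Node ts) (S d))%nat).
  { clear Hroot; setoid_rewrite gen_Node_S.
    induction IH as [|c ts [d1 H1] _ [d2 H2]]; [exists O; simpl; lia|].
    cbn [forest_max_outdeg forest_gen].
    destruct (Nat.le_ge_cases (max_outdeg c) (forest_max_outdeg ts));
      [exists d2 | exists d1]; lia. }
  destruct Hsub as [d Hd].
  destruct (Nat.le_ge_cases (length ts) (forest_max_outdeg ts)).
  - exists (S d); lia.
  - exists 1%nat; lia.
Qed.

Lemma max_outdeg_le_width t : (max_outdeg t <= width t)%nat.
Proof.
  destruct (max_outdeg_le_gen t) as [d Hd]; pose proof (gen_le_width t d); lia.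
Qed.

Lemma NoDup_flat_map {A B} (g : A -> list B) (L : list A) :
  NoDup L -> (forall x, In x L -> NoDup (g x)) ->
  (forall x y z, In x L -> In y L -> In z (g x) -> In z (g y) -> x = y) ->
  NoDup (flat_map g L).
Proof.
  induction L as [|a L IH]; intros HN Hg Hd; simpl; [constructor|].
  inversion HN; subst; apply NoDup_app.
  - apply Hg; simpl; auto.
  - apply IH; auto; [intros; apply Hg | intros; eapply Hd]; simpl; eauto.
  - intros z Hz1 Hz2; apply in_flat_map in Hz2 as [y [Hy Hz2]].
    assert (a = y) by (eapply Hd; simpl; eauto); subst; contradiction.
Qed.

Lemma NoDup_map_Node L : NoDup L -> NoDup (map Node L).
Proof.
  apply NoDup_map_NoDup_ForallPairs; intros x y _ _ E; now injection E.
Qed.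

Lemma in_forests_size fu m ts : In ts (forests fu m) -> forest_size ts = m.
Proof.
  revert m ts; induction fu as [|fu IH]; intros [|m] ts Hin; cbn [forests] in Hin;
    try (destruct Hin as [<-|[]]; reflexivity); [destruct Hin|].
  apply in_flat_map in Hin as [k [Hk Hin]]; apply in_seq in Hk.
  apply in_flat_map in Hin as [cs [Hcs Hin]]; apply in_map_iff in Hin as [r [<- Hr]].
  apply IH in Hcs, Hr; cbn [forest_size]; rewrite tsize_Node; lia.
Qed.

Lemma in_forests fu m ts : forest_size ts = m -> (m <= fu)%nat -> In ts (forests fu m).
Proof.
  revert m ts; induction fu as [|fu IH]; intros m [|[cs] ts] Hsize Hfu;
    cbn [forest_size] in Hsize; rewrite ?tsize_Node in Hsize; subst m.
  - simpl; auto.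
  - lia.
  - destruct fu; simpl; auto.
  - cbn [forests]; apply in_flat_map; exists (S (forest_size cs)).
    split; [apply in_seq; lia|].
    apply in_flat_map; exists cs; split; [apply IH; lia|].
    apply in_map, IH; lia.
Qed.

Lemma NoDup_forests fu m : NoDup (forests fu m).
Proof.
  revert m; induction fu as [|fu IH]; intros [|m]; cbn [forests];
    try (repeat constructor; auto; fail).
  apply NoDup_flat_map; [apply seq_NoDup| |].
  - intros k _; apply NoDup_flat_map; [apply IH| |].
    + intros cs _; apply NoDup_map_NoDup_ForallPairs; [|apply IH].
      intros x y _ _ E; now injection E.
    + intros cs1 cs2 z _ _ H1 H2; apply in_map_iff in H1 as [r1 [<- _]].
      apply in_map_iff in H2 as [r2 [E _]]; now injection E.
  - intros k1 k2 z Hk1 Hk2 H1 H2; apply in_seq in Hk1, Hk2.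
    apply in_flat_map in H1 as [cs1 [Hcs1 H1]]; apply in_flat_map in H2 as [cs2 [Hcs2 H2]].
    apply in_map_iff in H1 as [r1 [<- _]]; apply in_map_iff in H2 as [r2 [E _]].
    injection E as -> _; apply in_forests_size in Hcs1, Hcs2; lia.
Qed.

Lemma NoDup_trees n : NoDup (trees n).
Proof. destruct n; simpl; [constructor|]; apply NoDup_map_Node, NoDup_forests. Qed.

Lemma in_trees_tsize n t : In t (trees n) -> tsize t = n.
Proof.
  destruct n; simpl; [tauto|]; intros Hin; apply in_map_iff in Hin as [ts [<- Hin]].
  apply in_forests_size in Hin; rewrite tsize_Node; lia.
Qed.

Lemma in_trees t : In t (trees (tsize t)).
Proof. destruct t as [ts]; rewrite tsize_Node; apply in_map, in_forests; auto. Qed.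

Fixpoint lsum {A} (f : A -> R) (L : list A) : R :=
  match L with [] => 0 | x :: L' => f x + lsum f L' end.

Section ListSums.
Context {A : Type}.
Implicit Types (f g : A -> R) (L M : list A).

Lemma lsum_app f L M : lsum f (L ++ M) = lsum f L + lsum f M.
Proof. induction L; simpl; [ring|]; rewrite IHL; ring. Qed.

Lemma lsum_ext f g L : (forall x, In x L -> f x = g x) -> lsum f L = lsum g L.
Proof. induction L; intros H; simpl; auto; rewrite H, IHL; simpl; auto; intros; apply H; simpl; auto. Qed.

Lemma lsum_le f g L : (forall x, In x L -> f x <= g x) -> lsum f L <= lsum g L.
Proof.
  induction L; intros H; simpl; [lra|].
  apply Rplus_le_compat; [|apply IHL]; intros; apply H; simpl; auto.
Qed.

Lemma lsum_nonneg f L : (forall x, In x L -> 0 <= f x) -> 0 <= lsum f L.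
Proof. induction L; intros H; simpl; [lra|]; rewrite <- (Rplus_0_l 0).
  apply Rplus_le_compat; [|apply IHL]; intros; apply H; simpl; auto. Qed.

Lemma lsum_mult_l f c L : lsum (fun x => c * f x) L = c * lsum f L.
Proof. induction L; simpl; [ring|]; rewrite IHL; ring. Qed.

Lemma lsum_plus f g L : lsum (fun x => f x + g x) L = lsum f L + lsum g L.
Proof. induction L; simpl; [ring|]; rewrite IHL; ring. Qed.

Lemma lsum_minus f g L : lsum (fun x => f x - g x) L = lsum f L - lsum g L.
Proof. induction L; simpl; [ring|]; rewrite IHL; ring. Qed.

Lemma lsum_const c L : lsum (fun _ => c) L = INR (length L) * c.
Proof. induction L; simpl length; rewrite ?S_INR; simpl; [ring|]; rewrite IHL; ring. Qed.

Lemma fold_right_Rplus_map f L : fold_right Rplus 0 (map f L) = lsum f L.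
Proof. induction L; simpl; rewrite ?IHL; reflexivity. Qed.

Lemma lsum_le_incl f g L M :
  NoDup L -> (forall x, In x L -> f x <> 0 -> In x M) -> (forall x, 0 <= f x) ->
  (forall x, In x M -> f x <= g x) -> (forall x, 0 <= g x) -> lsum f L <= lsum g M.
Proof.
  intros HN; revert M; induction HN as [|x L Hx HN IH]; intros M Hin Hf Hfg Hg; simpl.
  - apply lsum_nonneg; auto.
  - destruct (Req_dec (f x) 0) as [E|E].
    + rewrite E, Rplus_0_l; apply IH; auto; intros; apply Hin; simpl; auto.
    + assert (HxM : In x M) by (apply Hin; simpl; auto).
      destruct (in_split _ _ HxM) as [M1 [M2 ->]].
      rewrite lsum_app; simpl.
      assert (lsum f L <= lsum g (M1 ++ M2)).
      { apply IH; auto.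
        - intros y Hy Hfy; specialize (Hin y (or_intror Hy) Hfy).
          apply in_app_or in Hin as [?|[->|?]]; [|contradiction|]; apply in_or_app; auto.
        - intros y Hy; apply Hfg; apply in_app_or in Hy; apply in_or_app; simpl; tauto. }
      rewrite lsum_app in H.
      assert (f x <= g x) by (apply Hfg, in_or_app; simpl; auto); lra.
Qed.

Lemma lsum_lt_const f L b : L <> [] -> (forall x, In x L -> f x < b) ->
  lsum f L < INR (length L) * b.
Proof.
  destruct L as [|x L]; [easy|intros _]; revert x.
  induction L as [|y L IH]; intros x H; cbn [length lsum].
  - specialize (H x (or_introl eq_refl)); simpl; lra.
  - specialize (IH y (fun z Hz => H z (or_intror Hz))); cbn [length lsum] in IH.
    specialize (H x (or_introl eq_refl)); rewrite !S_INR in *; lra.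
Qed.

Lemma lsum_pigeonhole f L c : L <> [] -> c <= lsum f L ->
  exists x, In x L /\ c / INR (length L) <= f x.
Proof.
  intros HL Hc; apply NNPP; intros Hno.
  assert (Hlen : 0 < INR (length L)) by (destruct L; [easy|apply lt_0_INR; simpl; lia]).
  assert (Hlt : lsum f L < INR (length L) * (c / INR (length L))).
  { apply lsum_lt_const; auto; intros x Hx.
    apply Rnot_le_lt; intros Hle; apply Hno; eauto. }
  replace (INR (length L) * (c / INR (length L))) with c in Hlt by (field; lra); lra.
Qed.

End ListSums.

Lemma lsum_map {A B} (f : B -> R) (g : A -> B) L :
  lsum f (map g L) = lsum (fun x => f (g x)) L.
Proof. induction L; simpl; rewrite ?IHL; reflexivity. Qed.

Lemma lsum_flat_map {A B} (f : B -> R) (g : A -> list B) L :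
  lsum f (flat_map g L) = lsum (fun x => lsum f (g x)) L.
Proof. induction L; simpl; rewrite ?lsum_app, ?IHL; reflexivity. Qed.

Lemma lsum_comm {A B} (F : A -> B -> R) (LA : list A) (LB : list B) :
  lsum (fun a => lsum (F a) LB) LA = lsum (fun b => lsum (fun a => F a b) LA) LB.
Proof.
  induction LA as [|a LA IH]; simpl.
  - rewrite lsum_const; ring.
  - rewrite IH, <- lsum_plus; reflexivity.
Qed.

Fixpoint cart {A} (L : list A) (k : nat) : list (list A) :=
  match k with O => [[]] | S k => flat_map (fun x => map (cons x) (cart L k)) L end.

Definition prodl {A} (phi : A -> R) (F : list A) : R :=
  fold_right (fun x acc => phi x * acc) 1 F.

(* [dprodl psi phi F] is the sum over positions [i] of the product of the [phi F_j]
   with the [i]-th factor replaced by [psi F_i]: the derivative of [prodl] in the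
   direction [psi]. *)
Fixpoint dprodl {A} (psi phi : A -> R) (F : list A) : R :=
  match F with [] => 0 | x :: F' => psi x * prodl phi F' + phi x * dprodl psi phi F' end.

Section CartesianPowers.
Context {A : Type}.
Implicit Types (L : list A) (phi psi : A -> R).

Lemma in_cart_length L k F : In F (cart L k) -> length F = k.
Proof.
  revert F; induction k; simpl; intros F H; [now destruct H as [<-|[]]|].
  apply in_flat_map in H as [x [_ H]]; apply in_map_iff in H as [F' [<- H]].
  simpl; f_equal; auto.
Qed.

Lemma in_cart L F : (forall x, In x F -> In x L) -> In F (cart L (length F)).
Proof.
  induction F; simpl; intros H; auto.
  apply in_flat_map; exists a; split; auto; apply in_map, IHF; auto.
Qed.

Lemma NoDup_cart L k : NoDup L -> NoDup (cart L k).
Proof.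
  intros HN; induction k; simpl; [repeat constructor; auto|].
  apply NoDup_flat_map; auto.
  - intros x _; apply NoDup_map_NoDup_ForallPairs; auto; intros a b _ _ E; now injection E.
  - intros x y z _ _ H1 H2; apply in_map_iff in H1 as [a [<- _]].
    apply in_map_iff in H2 as [b [E _]]; now injection E.
Qed.

Lemma prodl_nonneg phi F : (forall x, 0 <= phi x) -> 0 <= prodl phi F.
Proof. intros H; induction F; simpl; [lra|]; apply Rmult_le_pos; auto. Qed.

Lemma lsum_cart_prodl phi L k : lsum (prodl phi) (cart L k) = lsum phi L ^ k.
Proof.
  induction k; simpl; [unfold prodl; simpl; ring|].
  rewrite lsum_flat_map, <- IHk, Rmult_comm, <- lsum_mult_l.
  apply lsum_ext; intros x _; rewrite lsum_map, Rmult_comm, <- lsum_mult_l; reflexivity.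
Qed.

Lemma lsum_cart_dprodl psi phi L k :
  lsum (dprodl psi phi) (cart L k) = INR k * lsum phi L ^ pred k * lsum psi L.
Proof.
  induction k; simpl; [ring|].
  rewrite lsum_flat_map.
  rewrite (lsum_ext _ (fun x => lsum phi L ^ k * psi x +
                                (INR k * lsum phi L ^ pred k * lsum psi L) * phi x)).
  - rewrite lsum_plus, !lsum_mult_l.
    destruct k; [simpl; ring|]; rewrite S_INR; simpl; ring.
  - intros x _; rewrite lsum_map; simpl.
    rewrite lsum_plus, !lsum_mult_l, lsum_cart_prodl, IHk; ring.
Qed.

End CartesianPowers.

(** * Trees of bounded height and outdegree *)

Fixpoint btrees (D H : nat) : list ptree :=
  match H with
  | O => [Node []]
  | S H => flat_map (fun l => map Node (cart (btrees D H) l)) (seq 0 D)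
  end.

Lemma NoDup_btrees D H : NoDup (btrees D H).
Proof.
  induction H; simpl; [repeat constructor; auto|].
  apply NoDup_flat_map; [apply seq_NoDup| |].
  - intros l _; apply NoDup_map_Node, NoDup_cart; auto.
  - intros l1 l2 z _ _ H1 H2; apply in_map_iff in H1 as [F1 [<- H1]].
    apply in_map_iff in H2 as [F2 [E H2]]; injection E as ->.
    apply in_cart_length in H1, H2; lia.
Qed.

Lemma in_btrees D H t : (height t <= H)%nat -> (max_outdeg t < D)%nat -> In t (btrees D H).
Proof.
  revert t; induction H as [|H IH]; intros [ts] Hh Hd;
    rewrite height_Node in Hh; rewrite max_outdeg_Node in Hd.
  - destruct ts as [|c ts]; [simpl; auto|cbn [forest_height] in Hh; lia].
  - simpl; apply in_flat_map; exists (length ts); split; [apply in_seq; lia|].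
    apply in_map, in_cart; intros c Hc; apply IH.
    + clear - Hh Hc; induction ts as [|c' ts IHts]; [destruct Hc|].
      cbn [forest_height] in Hh; destruct Hc as [<-|Hc]; [lia|apply IHts; auto; lia].
    + clear - Hd Hc; induction ts as [|c' ts IHts]; [destruct Hc|].
      cbn [forest_max_outdeg length] in Hd; destruct Hc as [<-|Hc]; [lia|apply IHts; auto; lia].
Qed.

Lemma lsum_btrees_S D H (phi : ptree -> R) :
  lsum phi (btrees D (S H)) =
  lsum (fun l => lsum (fun F => phi (Node F)) (cart (btrees D H) l)) (seq 0 D).
Proof. simpl; rewrite lsum_flat_map; apply lsum_ext; intros; apply lsum_map. Qed.

Lemma forest_weight_prodl mu F : forest_weight mu F = prodl (weight mu) F.
Proof. induction F; simpl; rewrite ?IHF; reflexivity. Qed.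

Lemma weight_nonneg mu t : (forall k, 0 <= mu k) -> 0 <= weight mu t.
Proof.
  intros Hmu; induction t as [F IH] using ptree_nested_ind; rewrite weight_Node.
  apply Rmult_le_pos; auto; rewrite forest_weight_prodl.
  induction IH; simpl; [lra|]; apply Rmult_le_pos; auto.
Qed.

Lemma dprodl_forest_gen mu h F :
  dprodl (fun t => weight mu t * INR (gen t h)) (weight mu) F =
  INR (forest_gen F h) * prodl (weight mu) F.
Proof.
  induction F; simpl; [ring|]; rewrite IHF, plus_INR; unfold prodl; simpl; ring.
Qed.

Lemma dprodl_forest_size mu F :
  dprodl (fun t => weight mu t * INR (tsize t)) (weight mu) F =
  INR (forest_size F) * prodl (weight mu) F.
Proof.
  induction F; simpl; [ring|]; rewrite IHF, plus_INR; unfold prodl; simpl; ring.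
Qed.

Lemma prodl_weight_pow mu z F :
  prodl (fun t => weight mu t * z ^ tsize t) F = prodl (weight mu) F * z ^ forest_size F.
Proof. induction F; unfold prodl in *; simpl; [ring|]; rewrite IHF, pow_add; ring. Qed.

Lemma pow_ge_bernoulli x n : 0 <= x <= 1 -> 1 - INR n * (1 - x) <= x ^ n.
Proof.
  intros Hx; induction n; [simpl; lra|].
  rewrite S_INR; simpl; pose proof (pos_INR n).
  assert (0 <= INR n * (1 - x) * (1 - x)) by (apply Rmult_le_pos; [apply Rmult_le_pos|]; lra).
  assert (x * (1 - INR n * (1 - x)) <= x * x ^ n) by (apply Rmult_le_compat_l; lra).
  nra.
Qed.

Section BoundedTrees.
Variables (mu : nat -> R) (D : nat).
Hypothesis mu_nonneg : forall k, 0 <= mu k.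
Hypothesis D_pos : (1 <= D)%nat.
Let weight_pow_nonneg z t : 0 <= z -> 0 <= weight mu t * z ^ tsize t.
Proof. intros; apply Rmult_le_pos; [apply weight_nonneg|apply pow_le]; auto. Qed.

Let weight_INR_nonneg n t : 0 <= weight mu t * INR n.
Proof. apply Rmult_le_pos; [apply weight_nonneg; auto|apply pos_INR]. Qed.

(* Generating-function bound: a supersolution [u] of [u >= z * phi(u)], with [phi] the
   truncated offspring generating function, dominates [E[z^|T|]] over [btrees]. *)
Lemma btrees_gf_le z u : 0 < z -> 0 <= u ->
  z * lsum (fun l => mu l * u ^ l) (seq 0 D) <= u ->
  forall H, lsum (fun t => weight mu t * z ^ tsize t) (btrees D H) <= u.
Proof.
  intros Hz Hu Hfix H; induction H as [|H IH]; eapply Rle_trans; try apply Hfix.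
  - simpl.
    destruct D as [|D']; [lia|]; simpl.
    assert (0 <= lsum (fun l => mu l * u ^ l) (seq 1 D')).
    { apply lsum_nonneg; intros; apply Rmult_le_pos; auto; apply pow_le; auto. }
    pose proof (mu_nonneg 0); nra.
  - rewrite lsum_btrees_S, <- lsum_mult_l; apply lsum_le; intros l _.
    rewrite (lsum_ext _ (fun F => (z * mu l) * prodl (fun t => weight mu t * z ^ tsize t) F)).
    + rewrite lsum_mult_l, lsum_cart_prodl, Rmult_assoc.
      apply Rmult_le_compat_l; [lra|].
      apply Rmult_le_compat_l; auto; apply pow_incr; split; [|lra].
      apply lsum_nonneg; intros; apply weight_pow_nonneg; lra.
    + intros F HF; apply in_cart_length in HF.
      rewrite weight_Node, tsize_Node, forest_weight_prodl, prodl_weight_pow, HF; simpl; ring.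
Qed.

Hypothesis mass_le_1 : lsum mu (seq 0 D) <= 1.

Let mu_0_le_mass : mu O <= lsum mu (seq 0 D).
Proof.
  destruct D as [|D']; [lia|]; simpl.
  pose proof (lsum_nonneg mu (seq 1 D') (fun k _ => mu_nonneg k)); lra.
Qed.

Lemma btrees_mass_le_1 H : lsum (weight mu) (btrees D H) <= 1.
Proof.
  rewrite (lsum_ext _ (fun t => weight mu t * 1 ^ tsize t)) by (intros; rewrite pow1; ring).
  apply btrees_gf_le; try lra.
  rewrite Rmult_1_l, (lsum_ext _ mu); auto; intros; rewrite pow1; ring.
Qed.

Let mass_nonneg H : 0 <= lsum (weight mu) (btrees D H).
Proof. apply lsum_nonneg; intros; apply weight_nonneg; auto. Qed.

Variable m : R.
Hypothesis m_nonneg : 0 <= m.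
Hypothesis mean_le : lsum (fun l => INR l * mu l) (seq 0 D) <= m.

Let mean_nonneg : 0 <= lsum (fun l => INR l * mu l) (seq 0 D).
Proof. apply lsum_nonneg; intros; apply Rmult_le_pos; auto; apply pos_INR. Qed.

Lemma btrees_gen_mean_le H h :
  lsum (fun t => weight mu t * INR (gen t h)) (btrees D H) <= m ^ h.
Proof.
  revert h; induction H as [|H IH]; intros [|h].
  - simpl; lra.
  - pose proof (pow_le m (S h) m_nonneg); simpl in *; lra.
  - rewrite (lsum_ext _ (weight mu)) by (intros [ts] _; simpl; ring).
    apply btrees_mass_le_1.
  - set (G := lsum (fun t => weight mu t * INR (gen t h)) (btrees D H)).
    rewrite lsum_btrees_S.
    rewrite (lsum_ext _ (fun l => (INR l * mu l) *
        (lsum (weight mu) (btrees D H) ^ pred l * G))).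
    + apply Rle_trans with (lsum (fun l => G * (INR l * mu l)) (seq 0 D)).
      * apply lsum_le; intros l _; rewrite Rmult_comm; apply Rmult_le_compat_r.
        { apply Rmult_le_pos; auto; apply pos_INR. }
        rewrite <- (Rmult_1_l G) at 2; apply Rmult_le_compat_r.
        { apply lsum_nonneg; intros; apply weight_INR_nonneg. }
        rewrite <- (pow1 (pred l)); apply pow_incr; split; auto; apply btrees_mass_le_1.
      * rewrite lsum_mult_l; simpl; rewrite Rmult_comm.
        apply Rmult_le_compat; [apply mean_nonneg| |apply mean_le|apply IH].
        apply lsum_nonneg; intros; apply weight_INR_nonneg.
    + intros l _; transitivity (mu l * lsum
        (dprodl (fun t => weight mu t * INR (gen t h)) (weight mu)) (cart (btrees D H) l)).
      * rewrite <- lsum_mult_l; apply lsum_ext; intros F HF; apply in_cart_length in HF.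
        rewrite weight_Node, gen_Node_S, forest_weight_prodl, HF, dprodl_forest_gen; ring.
      * rewrite lsum_cart_dprodl; unfold G; ring.
Qed.

Hypothesis m_lt_1 : m < 1.

Lemma btrees_size_mean_le H :
  lsum (fun t => weight mu t * INR (tsize t)) (btrees D H) <= 1 / (1 - m).
Proof.
  assert (HB : 1 <= 1 / (1 - m)) by (apply Rmult_le_reg_r with (1 - m); field_simplify; lra).
  induction H as [|H IH].
  - simpl; lra.
  - rewrite lsum_btrees_S.
    set (U := lsum (weight mu) (btrees D H)).
    set (Y := lsum (fun t => weight mu t * INR (tsize t)) (btrees D H)) in *.
    assert (HU : 0 <= U <= 1) by (split; [apply mass_nonneg|apply btrees_mass_le_1]).
    assert (HY : 0 <= Y) by (apply lsum_nonneg; intros; apply weight_INR_nonneg).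
    rewrite (lsum_ext _ (fun l => mu l * (U ^ l + INR l * U ^ pred l * Y))).
    + apply Rle_trans with (lsum (fun l => mu l + Y * (INR l * mu l)) (seq 0 D)).
      * apply lsum_le; intros l _.
        assert (U ^ l <= 1) by (rewrite <- (pow1 l); apply pow_incr; auto).
        assert (0 <= U ^ pred l <= 1)
          by (split; [apply pow_le|rewrite <- (pow1 (pred l)); apply pow_incr]; lra).
        pose proof (pos_INR l); pose proof (mu_nonneg l).
        assert (INR l * U ^ pred l * Y <= INR l * Y).
        { rewrite Rmult_assoc; apply Rmult_le_compat_l; auto.
          rewrite <- (Rmult_1_l Y) at 2; apply Rmult_le_compat_r; lra. }
        nra.
      * rewrite lsum_plus, lsum_mult_l.
        assert (Y * lsum (fun l => INR l * mu l) (seq 0 D) <= 1 / (1 - m) * m)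
          by (apply Rmult_le_compat; auto).
        assert (1 + 1 / (1 - m) * m = 1 / (1 - m)) by (field; lra); lra.
    + intros l _; transitivity (mu l * (lsum (prodl (weight mu)) (cart (btrees D H) l) +
        lsum (dprodl (fun t => weight mu t * INR (tsize t)) (weight mu)) (cart (btrees D H) l))).
      * rewrite <- lsum_plus, <- lsum_mult_l; apply lsum_ext; intros F HF.
        apply in_cart_length in HF.
        rewrite weight_Node, tsize_Node, forest_weight_prodl, HF, dprodl_forest_size, S_INR.
        ring.
      * rewrite lsum_cart_prodl, lsum_cart_dprodl; reflexivity.
Qed.

(* A truncated tree reaches height [H] with probability at most [m ^ H]; the mass
   missing from [btrees] is otherwise the mass [s] cut off by the truncation. *)
Lemma btrees_mass_ge s : 0 <= s -> 1 - s <= lsum mu (seq 0 D) ->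
  forall H, 1 - lsum (weight mu) (btrees D H) <= s / (1 - m) + m ^ H.
Proof.
  intros Hs Hmass H.
  assert (Hsm : 0 <= s / (1 - m)) by (apply Rmult_le_pos; [|apply Rlt_le, Rinv_0_lt_compat]; lra).
  induction H as [|H IH].
  - pose proof (mu_nonneg 0); simpl; lra.
  - rewrite lsum_btrees_S.
    set (U := lsum (weight mu) (btrees D H)) in *.
    assert (HU : 0 <= U <= 1) by (split; [apply mass_nonneg|apply btrees_mass_le_1]).
    rewrite (lsum_ext _ (fun l => mu l * U ^ l)).
    + assert (lsum (fun l => mu l - (1 - U) * (INR l * mu l)) (seq 0 D)
              <= lsum (fun l => mu l * U ^ l) (seq 0 D)).
      { apply lsum_le; intros l _; pose proof (pow_ge_bernoulli U l HU).
        pose proof (mu_nonneg l); nra. }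
      rewrite lsum_minus, lsum_mult_l in H0.
      assert ((1 - U) * lsum (fun l => INR l * mu l) (seq 0 D) <= (1 - U) * m)
        by (apply Rmult_le_compat_l; lra).
      assert (m * (1 - U) <= m * (s / (1 - m) + m ^ H)) by (apply Rmult_le_compat_l; lra).
      replace (s / (1 - m) + m ^ S H) with (s + m * (s / (1 - m) + m ^ H)) by (simpl; field; lra).
      lra.
    + intros l _; unfold U; rewrite <- lsum_cart_prodl, <- lsum_mult_l.
      apply lsum_ext; intros F HF; apply in_cart_length in HF.
      rewrite weight_Node, forest_weight_prodl, HF; reflexivity.
Qed.

End BoundedTrees.

(** * Conditioned trees of a given size *)

Lemma Psize_lsum mu n : Defs.Psize mu n = lsum (weight mu) (trees n).
Proof. apply fold_right_Rplus_map. Qed.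

Lemma Pcond_ge mu n (P : ptree -> Prop) eps : 0 < Defs.Psize mu n ->
  lsum (fun t => if excluded_middle_informative (P t) then 0 else weight mu t) (trees n)
    <= eps * Defs.Psize mu n ->
  1 - eps <= Pcond mu n P.
Proof.
  intros Hpos Hbad; unfold Pcond; rewrite fold_right_Rplus_map.
  rewrite (lsum_ext _ (fun t => weight mu t -
      (if excluded_middle_informative (P t) then 0 else weight mu t)))
    by (intros t _; destruct (excluded_middle_informative (P t)); ring).
  rewrite lsum_minus, <- Psize_lsum.
  apply Rmult_le_reg_r with (Defs.Psize mu n); auto; unfold Rdiv.
  rewrite Rmult_assoc, Rinv_l, Rmult_1_r by lra; lra.
Qed.

(* A tree with [n] vertices has outdegrees below [n], so only the part of [mu] below
   [n] matters; then Markov's inequality on the size of generation [h]. *)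
Lemma trees_height_tail mu n m h : (1 <= n)%nat -> (forall k, 0 <= mu k) -> 0 <= m ->
  lsum mu (seq 0 n) <= 1 -> lsum (fun l => INR l * mu l) (seq 0 n) <= m ->
  lsum (fun t => if le_dec h (height t) then weight mu t else 0) (trees n) <= m ^ h.
Proof.
  intros Hn Hmu Hm Hmass Hmean.
  eapply Rle_trans; [|apply (btrees_gen_mean_le mu n Hmu Hn Hmass m Hm Hmean n h)].
  assert (Hw : forall t k, 0 <= weight mu t * INR k)
    by (intros; apply Rmult_le_pos; [apply weight_nonneg; auto|apply pos_INR]).
  apply Rle_trans with (lsum (fun t => weight mu t * INR (gen t h)) (trees n)).
  - apply lsum_le; intros t _; destruct (le_dec h (height t)) as [Hh|]; [|apply Hw].
    apply gen_pos_iff in Hh; apply le_INR in Hh; simpl in Hh.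
    pose proof (weight_nonneg mu t Hmu); nra.
  - apply lsum_le_incl; auto using NoDup_trees; [|intros; lra].
    intros t Ht _; apply in_trees_tsize in Ht; apply in_btrees.
    + pose proof (height_lt_tsize t); lia.
    + pose proof (max_outdeg_lt_tsize t); lia.
Qed.

Lemma trees_small_outdeg_le mu n Kd z u : (1 <= Kd)%nat -> (forall k, 0 <= mu k) ->
  0 < z -> 0 <= u -> z * lsum (fun l => mu l * u ^ l) (seq 0 Kd) <= u ->
  lsum (fun t => if lt_dec (max_outdeg t) Kd then weight mu t else 0) (trees n) * z ^ n <= u.
Proof.
  intros HK Hmu Hz Hu Hfix.
  eapply Rle_trans; [|apply (btrees_gf_le mu Kd Hmu HK z u Hz Hu Hfix n)].
  assert (Hw : forall t, 0 <= weight mu t * z ^ tsize t)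
    by (intros; apply Rmult_le_pos; [apply weight_nonneg|apply pow_le; lra]; auto).
  rewrite Rmult_comm, <- lsum_mult_l.
  rewrite (lsum_ext _ (fun t => if lt_dec (max_outdeg t) Kd then weight mu t * z ^ tsize t else 0)).
  - apply lsum_le_incl; auto using NoDup_trees.
    + intros t Ht Hne; apply in_trees_tsize in Ht.
      destruct (lt_dec (max_outdeg t) Kd); [|lra].
      apply in_btrees; auto; pose proof (height_lt_tsize t); lia.
    + intros t; destruct (lt_dec (max_outdeg t) Kd); [apply Hw|lra].
    + intros t _; destruct (lt_dec (max_outdeg t) Kd); [lra|apply Hw].
  - intros t Ht; apply in_trees_tsize in Ht; subst.
    destruct (lt_dec (max_outdeg t) Kd); ring.
Qed.

Lemma lsum_seq_indicator a b k g :
  lsum (fun n => if Nat.eq_dec k n then g else 0) (seq a b) =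
  if le_dec a k then if lt_dec k (a + b) then g else 0 else 0.
Proof.
  revert a; induction b as [|b IH]; intros a; simpl.
  - destruct (le_dec a k), (lt_dec k (a + 0)); try lia; reflexivity.
  - rewrite IH; destruct (Nat.eq_dec k a), (le_dec a k), (le_dec (S a) k),
      (lt_dec k (a + S b)), (lt_dec k (S a + b)); try lia; ring.
Qed.

(* Markov's inequality for the total size of [K] independent truncated trees. *)
Lemma forests_size_lt_mass mu D H K M m : (1 <= D)%nat -> (forall k, 0 <= mu k) ->
  0 <= m < 1 -> (1 <= M)%nat ->
  lsum mu (seq 0 D) <= 1 -> lsum (fun l => INR l * mu l) (seq 0 D) <= m ->
  lsum (weight mu) (btrees D H) ^ K - INR K / ((1 - m) * INR M) <=
  lsum (fun F => if lt_dec (forest_size F) M then prodl (weight mu) F else 0)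
    (cart (btrees D H) K).
Proof.
  intros HD Hmu Hm HM Hmass Hmean.
  set (U := lsum (weight mu) (btrees D H)).
  set (Y := lsum (fun t => weight mu t * INR (tsize t)) (btrees D H)).
  assert (HU : 0 <= U <= 1).
  { split; [apply lsum_nonneg; intros; apply weight_nonneg; auto|apply btrees_mass_le_1; auto]. }
  assert (HY : 0 <= Y <= 1 / (1 - m)).
  { split; [apply lsum_nonneg; intros; apply Rmult_le_pos; [apply weight_nonneg; auto|apply pos_INR]|].
    apply btrees_size_mean_le; auto; lra. }
  assert (HM0 : 0 < INR M) by (apply lt_0_INR; lia).
  apply Rle_trans with (lsum (fun F => prodl (weight mu) F -
      / INR M * (INR (forest_size F) * prodl (weight mu) F)) (cart (btrees D H) K)).
  - rewrite lsum_minus, lsum_mult_l, lsum_cart_prodl.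
    rewrite (lsum_ext _ (dprodl (fun t => weight mu t * INR (tsize t)) (weight mu)))
      by (intros; symmetry; apply dprodl_forest_size).
    rewrite lsum_cart_dprodl; fold U Y.
    assert (0 <= U ^ pred K <= 1)
      by (split; [apply pow_le|rewrite <- (pow1 (pred K)); apply pow_incr]; lra).
    assert (INR K * U ^ pred K * Y <= INR K * (1 / (1 - m))).
    { pose proof (pos_INR K); rewrite Rmult_assoc; apply Rmult_le_compat_l; auto.
      rewrite <- (Rmult_1_l (1 / (1 - m))); apply Rmult_le_compat; lra. }
    assert (/ INR M * (INR K * U ^ pred K * Y) <= / INR M * (INR K * (1 / (1 - m))))
      by (apply Rmult_le_compat_l; auto; left; apply Rinv_0_lt_compat; auto).
    replace (INR K / ((1 - m) * INR M)) with (/ INR M * (INR K * (1 / (1 - m))))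
      by (field; lra); lra.
  - apply lsum_le; intros F _.
    assert (Hp : 0 <= prodl (weight mu) F) by (apply prodl_nonneg; intros; apply weight_nonneg; auto).
    assert (0 <= / INR M * (INR (forest_size F) * prodl (weight mu) F)).
    { apply Rmult_le_pos; [left; apply Rinv_0_lt_compat; auto|].
      apply Rmult_le_pos; auto; apply pos_INR. }
    destruct (lt_dec (forest_size F) M) as [|Hge]; [lra|].
    assert (1 <= / INR M * INR (forest_size F)).
    { apply Rmult_le_reg_l with (INR M); auto.
      rewrite <- Rmult_assoc, Rinv_r, Rmult_1_l, Rmult_1_r by lra; apply le_INR; lia. }
    nra.
Qed.

(* The trees whose root has [K] children, each in [btrees D H], have total weight
   close to [mu K * U ^ K]; by Markov most of it sits on sizes at most [M], and by
   pigeonhole one size carries a [1/M] share of it. *)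
Lemma Psize_lower_bound mu D H K M m : (1 <= D)%nat -> (forall k, 0 <= mu k) ->
  0 <= m < 1 -> (1 <= M)%nat ->
  lsum mu (seq 0 D) <= 1 -> lsum (fun l => INR l * mu l) (seq 0 D) <= m ->
  0 < mu K * (lsum (weight mu) (btrees D H) ^ K - INR K / ((1 - m) * INR M)) ->
  exists n, (K < n <= M)%nat /\
    mu K * (lsum (weight mu) (btrees D H) ^ K - INR K / ((1 - m) * INR M)) / INR M
      <= Defs.Psize mu n.
Proof.
  intros HD Hmu Hm HM Hmass Hmean.
  set (T := mu K * _); intros HT.
  set (fam := map Node (cart (btrees D H) K)).
  set (c := fun n => lsum (fun t => if Nat.eq_dec (tsize t) n then weight mu t else 0) fam).
  assert (HTc : T <= lsum c (seq (S K) (M - K))).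
  { unfold c; rewrite lsum_comm; unfold fam; rewrite lsum_map.
    unfold T.
    rewrite <- (lsum_ext (fun F => mu K *
        (if lt_dec (forest_size F) M then prodl (weight mu) F else 0))).
    - rewrite lsum_mult_l; apply Rmult_le_compat_l; auto.
      apply forests_size_lt_mass; auto.
    - intros F HF; apply in_cart_length in HF.
      rewrite lsum_seq_indicator, tsize_Node, weight_Node, forest_weight_prodl, HF.
      pose proof (length_le_forest_size F).
      destruct (lt_dec (forest_size F) M), (le_dec (S K) (S (forest_size F))),
        (lt_dec (S (forest_size F)) (S K + (M - K))); try lia; ring. }
  assert (Hne : seq (S K) (M - K) <> []).
  { intros E; rewrite E in HTc; simpl in HTc; lra. }
  destruct (lsum_pigeonhole c _ T Hne HTc) as [n [Hn Hc]].
  apply in_seq in Hn; rewrite length_seq in Hc.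
  exists n; split; [lia|].
  apply Rle_trans with (T / INR (M - K)).
  - apply Rmult_le_compat_l; [lra|].
    apply Rinv_le_contravar; [apply lt_0_INR; lia|apply le_INR; lia].
  - eapply Rle_trans; [apply Hc|]; rewrite Psize_lsum.
    apply lsum_le_incl.
    + apply NoDup_map_Node, NoDup_cart, NoDup_btrees.
    + intros t _ Hne'; destruct (Nat.eq_dec (tsize t) n) as [<-|]; [apply in_trees|lra].
    + intros t; destruct (Nat.eq_dec (tsize t) n); [apply weight_nonneg; auto|lra].
    + intros t Ht; apply in_trees_tsize in Ht; destruct (Nat.eq_dec (tsize t) n); [lra|apply weight_nonneg; auto].
    + intros; apply weight_nonneg; auto.
Qed.

(** * The offspring distribution *)

Definition share (i : nat) : R := (/2) ^ S i.

Definition atom (K : nat -> nat) (i : nat) : R := share i / INR (K i).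

(* [mu 0 = 1 - A], [mu (K i) = share i / K i], and [mu k = 0] otherwise; since
   [K i > i], the index [i] with [K i = k] can be searched for below [k]. *)
Definition offspring (K : nat -> nat) (A : R) (k : nat) : R :=
  (if Nat.eq_dec k 0 then 1 - A else 0) +
  lsum (fun i => if Nat.eq_dec (K i) k then atom K i else 0) (seq 0 k).

Lemma share_pos i : 0 < share i.
Proof. apply pow_lt; lra. Qed.

Lemma lsum_share a n : lsum share (seq a n) = (/2) ^ a - (/2) ^ (a + n).
Proof.
  revert a; induction n as [|n IH]; intros a; simpl; [rewrite Nat.add_0_r; ring|].
  rewrite IH; unfold share; replace (a + S n)%nat with (S (a + n)) by lia; simpl; field.
Qed.

Lemma sum_f_R0_lsum g N : sum_f_R0 g N = lsum g (seq 0 (S N)).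
Proof.
  induction N as [|N IH]; [simpl; ring|].
  rewrite seq_S, lsum_app, <- IH; simpl; ring.
Qed.

Lemma Un_cv_le (u : nat -> R) l M : Un_cv u l -> (forall n, u n <= M) -> l <= M.
Proof.
  intros Hu HM; apply Rnot_lt_le; intros Hlt.
  destruct (Hu (l - M)) as [N HN]; [lra|].
  specialize (HN N (le_n _)); specialize (HM N).
  unfold Rdist in HN; apply Rabs_def2 in HN; lra.
Qed.

Lemma seq_0_split a b : (a <= b)%nat -> seq 0 b = seq 0 a ++ seq a (b - a).
Proof. intros Hab; rewrite <- seq_app; f_equal; lia. Qed.

Lemma lsum_seq_cut (g : nat -> R) J D : (J <= D)%nat ->
  lsum (fun i => if lt_dec i J then g i else 0) (seq 0 D) = lsum g (seq 0 J).
Proof.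
  intros HJD; rewrite (seq_0_split J D HJD), lsum_app.
  rewrite (lsum_ext _ g), (lsum_ext (fun i => if lt_dec i J then g i else 0) (fun _ => 0)).
  - rewrite lsum_const; ring.
  - intros i Hi; apply in_seq in Hi; destruct (lt_dec i J); [lia|reflexivity].
  - intros i Hi; apply in_seq in Hi; destruct (lt_dec i J); [reflexivity|lia].
Qed.

Section Offspring.
Variables (K : nat -> nat) (A : R).
Hypothesis K_0 : (2 <= K 0)%nat.
Hypothesis K_S : forall i, (K i < K (S i))%nat.

Lemma K_lt i j : (i < j)%nat -> (K i < K j)%nat.
Proof. intros Hij; induction Hij; [apply K_S|specialize (K_S m); lia]. Qed.

Lemma K_lt_iff i j : (K i < K j)%nat <-> (i < j)%nat.
Proof.
  split; [|apply K_lt]; intros H.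
  destruct (lt_eq_lt_dec i j) as [[|<-]|Hji]; [auto|lia|].
  pose proof (K_lt j i Hji); lia.
Qed.

Lemma K_ge i : (i + 2 <= K i)%nat.
Proof. induction i; [lia|specialize (K_S i); lia]. Qed.

Lemma atom_pos i : 0 < atom K i.
Proof. apply Rdiv_lt_0_compat; [apply share_pos|apply lt_0_INR; pose proof (K_ge i); lia]. Qed.

Lemma atom_mul_K i : atom K i * INR (K i) = share i.
Proof. unfold atom; field; apply not_0_INR; pose proof (K_ge i); lia. Qed.

Lemma atom_le i : atom K i <= share i / INR (K 0).
Proof.
  unfold atom, Rdiv; apply Rmult_le_compat_l; [left; apply share_pos|].
  apply Rinv_le_contravar; [apply lt_0_INR; lia|apply le_INR].
  destruct i; [lia|pose proof (K_lt 0 (S i)); lia].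
Qed.

Lemma K_count D : exists J, forall i, (K i < D)%nat <-> (i < J)%nat.
Proof.
  induction D as [|D [J HJ]]; [exists O; lia|].
  destruct (Nat.eq_dec (K J) D) as [E|E].
  - exists (S J); intros i; specialize (HJ i).
    destruct (Nat.eq_dec i J) as [->|Hi]; [lia|].
    enough (K i <> D) by lia; rewrite <- E; intros Ei.
    destruct (lt_eq_lt_dec i J) as [[Hl|Hl]|Hl];
      [pose proof (K_lt i J Hl)|lia|pose proof (K_lt J i Hl)]; lia.
  - exists J; intros i; pose proof (HJ i) as HJi; split; [|lia]; intros Hi.
    destruct (Nat.eq_dec (K i) D) as [Ei|]; [|lia].
    destruct (lt_eq_lt_dec i J) as [[Hl|<-]|Hl]; [lia|congruence|].
    pose proof (K_lt J i Hl); pose proof (HJ J); lia.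
Qed.

Lemma lsum_offspring_mult (phi : nat -> R) D J : (1 <= D)%nat ->
  (forall i, (K i < D)%nat <-> (i < J)%nat) ->
  lsum (fun k => offspring K A k * phi k) (seq 0 D) =
  (1 - A) * phi O + lsum (fun i => atom K i * phi (K i)) (seq 0 J).
Proof.
  intros HD HJ.
  assert (HJD : (J <= D)%nat).
  { destruct (le_lt_dec J D) as [|HDJ]; [auto|].
    apply HJ in HDJ; pose proof (K_ge D); lia. }
  set (g k i := if Nat.eq_dec (K i) k then atom K i * phi (K i) else 0).
  rewrite (lsum_ext _ (fun k => (if Nat.eq_dec 0 k then (1 - A) * phi 0%nat else 0) +
      lsum (g k) (seq 0 D))).
  - rewrite lsum_plus, lsum_seq_indicator, lsum_comm.
    destruct (le_dec 0 0), (lt_dec 0 (0 + D)); try lia; f_equal.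
    rewrite <- (lsum_seq_cut _ J D HJD); apply lsum_ext; intros i Hi.
    unfold g; rewrite lsum_seq_indicator.
    specialize (HJ i); destruct (le_dec 0 (K i)), (lt_dec (K i) (0 + D)), (lt_dec i J);
      try reflexivity; lia.
  - intros k Hk; apply in_seq in Hk; unfold offspring.
    rewrite Rmult_plus_distr_r; f_equal; [destruct (Nat.eq_dec k 0), (Nat.eq_dec 0 k); subst; lia || ring|].
    rewrite Rmult_comm, <- lsum_mult_l, <- (lsum_seq_cut _ k D) by lia.
    apply lsum_ext; intros i _; unfold g.
    destruct (Nat.eq_dec (K i) k) as [<-|];
      [destruct (lt_dec i (K i))|destruct (lt_dec i k)]; try ring.
    pose proof (K_ge i); lia.
Qed.


Hypothesis A_lim : Un_cv (fun N => sum_f_R0 (atom K) N) A.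

Lemma lsum_atom_le_A n : lsum (atom K) (seq 0 n) <= A.
Proof.
  pose proof (fun N => sum_incr (atom K) N A A_lim (fun i => Rlt_le _ _ (atom_pos i))) as Hle.
  destruct n as [|n]; [|rewrite <- sum_f_R0_lsum; auto].
  specialize (Hle 0%nat); pose proof (atom_pos 0); simpl in *; lra.
Qed.

Lemma A_le_half : A <= /2.
Proof.
  apply (Un_cv_le _ _ _ A_lim); intros N; rewrite sum_f_R0_lsum.
  apply Rle_trans with (lsum (fun i => /2 * share i) (seq 0 (S N))).
  - apply lsum_le; intros i _; eapply Rle_trans; [apply atom_le|].
    unfold Rdiv; rewrite Rmult_comm; apply Rmult_le_compat_r; [left; apply share_pos|].
    apply Rinv_le_contravar; [lra|]; apply (le_INR 2); auto.
  - rewrite lsum_mult_l, lsum_share; pose proof (pow_lt (/2) (0 + S N)); simpl in *; lra.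
Qed.

Lemma offspring_nonneg k : 0 <= offspring K A k.
Proof.
  unfold offspring; pose proof A_le_half.
  assert (0 <= lsum (fun i => if Nat.eq_dec (K i) k then atom K i else 0) (seq 0 k)).
  { apply lsum_nonneg; intros i _; destruct (Nat.eq_dec (K i) k); [left; apply atom_pos|lra]. }
  destruct (Nat.eq_dec k 0); lra.
Qed.

Lemma offspring_K j : offspring K A (K j) = atom K j.
Proof.
  pose proof (K_ge j) as Hj; unfold offspring.
  destruct (Nat.eq_dec (K j) 0) as [|_]; [lia|rewrite Rplus_0_l].
  rewrite (lsum_ext _ (fun i => if Nat.eq_dec j i then atom K j else 0)).
  - rewrite lsum_seq_indicator; destruct (le_dec 0 j), (lt_dec j (0 + K j)); lia || reflexivity.
  - intros i _; destruct (Nat.eq_dec (K i) (K j)) as [E|E], (Nat.eq_dec j i) as [<-|];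
      auto; [|congruence].
    destruct (lt_eq_lt_dec i j) as [[Hl|Hl]|Hl];
      [pose proof (K_lt i j Hl)|congruence|pose proof (K_lt j i Hl)]; lia.
Qed.

Lemma offspring_mass_trunc D J : (1 <= D)%nat -> (forall i, (K i < D)%nat <-> (i < J)%nat) ->
  lsum (offspring K A) (seq 0 D) = 1 - A + lsum (atom K) (seq 0 J).
Proof.
  intros HD HJ.
  rewrite (lsum_ext _ (fun k => offspring K A k * 1)) by (intros; ring).
  rewrite (lsum_offspring_mult _ D J HD HJ), (lsum_ext _ (atom K)) by (intros; ring); ring.
Qed.

Lemma offspring_mean_trunc D J : (1 <= D)%nat -> (forall i, (K i < D)%nat <-> (i < J)%nat) ->
  lsum (fun k => INR k * offspring K A k) (seq 0 D) = 1 - (/2) ^ J.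
Proof.
  intros HD HJ.
  rewrite (lsum_ext _ (fun k => offspring K A k * INR k)) by (intros; ring).
  rewrite (lsum_offspring_mult _ D J HD HJ), (lsum_ext _ share), lsum_share
    by (intros; apply atom_mul_K).
  simpl; ring.
Qed.

Lemma offspring_mass_le_1 D : lsum (offspring K A) (seq 0 D) <= 1.
Proof.
  destruct D as [|D]; [simpl; lra|].
  destruct (K_count (S D)) as [J HJ].
  rewrite (offspring_mass_trunc (S D) J); [pose proof (lsum_atom_le_A J); lra|lia|auto].
Qed.

(* The atoms beyond [j] are at most [share i / K (S j)], and the shares sum to [share j]. *)
Lemma A_sub_lsum_atom_le j : A - lsum (atom K) (seq 0 (S j)) <= (/2) ^ S j / INR (K (S j)).
Proof.
  assert (HK : 0 < INR (K (S j))) by (apply lt_0_INR; pose proof (K_ge (S j)); lia).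
  enough (A <= lsum (atom K) (seq 0 (S j)) + (/2) ^ S j / INR (K (S j))) by lra.
  apply (Un_cv_le _ _ _ A_lim); intros N; rewrite sum_f_R0_lsum.
  assert (0 <= (/2) ^ S j / INR (K (S j)))
    by (apply Rlt_le, Rdiv_lt_0_compat; [apply pow_lt; lra|auto]).
  destruct (le_lt_dec (S N) (S j)) as [HN|HN].
  - rewrite (seq_0_split (S N) (S j) HN), lsum_app.
    pose proof (lsum_nonneg (atom K) (seq (S N) (S j - S N)) (fun i _ => Rlt_le _ _ (atom_pos i))).
    lra.
  - rewrite (seq_0_split (S j) (S N)), lsum_app by lia.
    apply Rplus_le_compat_l.
    apply Rle_trans with (lsum (fun i => / INR (K (S j)) * share i) (seq (S j) (S N - S j))).
    + apply lsum_le; intros i Hi; apply in_seq in Hi; unfold atom, Rdiv.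
      rewrite Rmult_comm; apply Rmult_le_compat_r; [left; apply share_pos|].
      apply Rinv_le_contravar; auto; apply le_INR.
      destruct (Nat.eq_dec i (S j)) as [->|]; [lia|pose proof (K_lt (S j) i); lia].
    + rewrite lsum_mult_l, lsum_share; unfold Rdiv; rewrite Rmult_comm.
      apply Rmult_le_compat_r; [left; apply Rinv_0_lt_compat; auto|].
      pose proof (pow_le (/2) (S j + (S N - S j))); lra.
Qed.

Lemma Un_cv_lsum_seq (g : nat -> R) l :
  Un_cv (fun N => sum_f_R0 g N) l -> Un_cv (fun N => lsum g (seq 0 N)) l.
Proof.
  intros Hg eps Heps; destruct (Hg eps Heps) as [N HN]; exists (S N); intros [|n] Hn; [lia|].
  rewrite <- sum_f_R0_lsum; apply HN; lia.
Qed.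

Lemma Un_cv_offspring_sums (phi : nat -> R) l :
  Un_cv (fun J => lsum (fun i => atom K i * phi (K i)) (seq 0 J)) l ->
  Un_cv (fun n => sum_f_R0 (fun k => offspring K A k * phi k) n) ((1 - A) * phi O + l).
Proof.
  intros Hl eps Heps; destruct (Hl eps Heps) as [N HN]; exists (K N); intros n Hn.
  destruct (K_count (S n)) as [J HJ].
  rewrite sum_f_R0_lsum, (lsum_offspring_mult phi (S n) J) by (auto; lia).
  unfold Rdist; replace ((1 - A) * phi 0%nat + lsum (fun i => atom K i * phi (K i)) (seq 0 J) -
    ((1 - A) * phi 0%nat + l)) with (lsum (fun i => atom K i * phi (K i)) (seq 0 J) - l) by ring.
  apply HN; pose proof (proj1 (HJ N)); lia.
Qed.

Lemma critical_offspring_intro : critical_offspring (offspring K A).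
Proof.
  split; [exact offspring_nonneg|split]; intros eps Heps.
  - destruct (Un_cv_offspring_sums (fun _ => 1) A) with eps as [N HN]; auto.
    { apply Un_cv_lsum_seq; intros e He; destruct (A_lim e He) as [N HN]; exists N.
      intros n Hn; rewrite (sum_eq _ (atom K)) by (intros; ring); auto. }
    exists N; intros n Hn; specialize (HN n Hn); cbv beta in HN.
    rewrite (sum_eq _ (fun k => offspring K A k * 1)) by (intros; ring).
    replace ((1 - A) * 1 + A) with 1 in HN by ring; exact HN.
  - destruct (Un_cv_offspring_sums INR 1) with eps as [N HN]; auto.
    { intros e He; destruct (pow_lt_1_zero (/2) ltac:(rewrite Rabs_pos_eq; lra) e He) as [N HN].
      exists N; intros n Hn; rewrite (lsum_ext _ share), lsum_share by (intros; apply atom_mul_K).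
      unfold Rdist; replace ((/2) ^ 0 - (/2) ^ (0 + n) - 1) with (- (/2) ^ n) by (simpl; ring).
      rewrite Rabs_Ropp; apply HN; auto. }
    exists N; intros n Hn; specialize (HN n Hn).
    rewrite (sum_eq _ (fun k => offspring K A k * INR k)) by (intros; ring).
    replace ((1 - A) * INR 0 + 1) with 1 in HN by (simpl; ring); exact HN.
Qed.

End Offspring.

Lemma atom_series_cv K : (2 <= K 0)%nat -> (forall i, (K i < K (S i))%nat) ->
  {A | Un_cv (fun N => sum_f_R0 (atom K) N) A}.
Proof.
  intros K_0 K_S; apply growing_cv.
  - intros N; simpl; pose proof (atom_pos K K_0 K_S (S N)); lra.
  - exists 1; intros x [N ->]; rewrite sum_f_R0_lsum.
    apply Rle_trans with (lsum share (seq 0 (S N))).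
    + apply lsum_le; intros i _; eapply Rle_trans; [apply atom_le; auto|].
      pose proof (share_pos i); unfold Rdiv; rewrite <- (Rmult_1_r (share i)) at 2.
      apply Rmult_le_compat_l; [lra|rewrite <- Rinv_1; apply Rinv_le_contravar; [lra|]].
      apply (le_INR 1); lia.
    + rewrite lsum_share; pose proof (pow_lt (/2) (0 + S N)); simpl in *; lra.
Qed.

Lemma floor_nat x : 0 <= x -> exists h : nat, INR h <= x < INR h + 1.
Proof.
  intros Hx; destruct (archimed x) as [H1 H2].
  assert (Hz : (0 < up x)%Z) by (apply lt_IZR; lra).
  exists (Z.to_nat (up x - 1)); rewrite INR_IZR_INZ, Z2Nat.id, minus_IZR by lia; simpl; lra.
Qed.

Lemma nat_above c : exists N : nat, c <= INR N.
Proof.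
  destruct (floor_nat (Rmax c 0)) as [h Hh]; [apply Rmax_r|].
  exists (S h); rewrite S_INR; pose proof (Rmax_l c 0); lra.
Qed.

Lemma exp_le_mono x y : x <= y -> exp x <= exp y.
Proof. intros [H|H]; [left; apply exp_increasing; auto|subst; lra]. Qed.

Lemma pow_one_sub_le_exp d h : 0 < d < 1 -> (1 - d) ^ h <= exp (- (d * INR h)).
Proof.
  intros Hd; apply Rle_trans with (exp (- d) ^ h).
  - apply pow_incr; split; [lra|]; pose proof (exp_ineq1 (- d)); lra.
  - right; induction h as [|h IH]; [simpl; rewrite Rmult_0_r, Ropp_0, exp_0; reflexivity|].
    change (exp (- d) ^ S h) with (exp (- d) * exp (- d) ^ h).
    rewrite IH, <- exp_plus, S_INR; f_equal; ring.
Qed.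

Lemma ln_INR_nonneg n : (1 <= n)%nat -> 0 <= ln (INR n).
Proof.
  intros Hn; rewrite <- ln_1; destruct (Nat.eq_dec n 1) as [->|]; [simpl; lra|].
  left; apply ln_increasing; [lra|apply (lt_INR 1); lia].
Qed.

(* With [f n >= 4/d], generation [floor (f n * ln n)] of a tree whose mean offspring
   is [1 - d] is empty with probability [1 - O(n^-4)]. *)
Lemma pow_one_sub_le_inv_pow4 d n fn h : 0 < d < 1 -> (1 <= n)%nat -> 4 / d <= fn ->
  fn * ln (INR n) < INR h + 1 -> (1 - d) ^ h <= 3 / INR n ^ 4.
Proof.
  intros Hd Hn Hf Hh; eapply Rle_trans; [apply pow_one_sub_le_exp; auto|].
  assert (Hn0 : 0 < INR n) by (apply lt_0_INR; lia).
  assert (Hl : 0 <= ln (INR n)) by (apply ln_INR_nonneg; auto).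
  assert (H4 : 4 <= d * fn).
  { apply Rmult_le_reg_r with (/ d); [apply Rinv_0_lt_compat; lra|].
    replace (d * fn * / d) with fn by (field; lra); unfold Rdiv in Hf; lra. }
  assert (Hexp : - (d * INR h) <= d + - (INR 4 * ln (INR n))).
  { assert (d * (fn * ln (INR n)) < d * (INR h + 1)) by (apply Rmult_lt_compat_l; lra).
    assert (4 * ln (INR n) <= d * fn * ln (INR n)) by (apply Rmult_le_compat_r; lra).
    simpl INR; nra. }
  apply exp_le_mono in Hexp; eapply Rle_trans; [apply Hexp|].
  rewrite exp_plus, exp_Ropp, <- ln_pow, exp_ln by (try apply pow_lt; lra).
  assert (exp d <= 3) by (eapply Rle_trans; [apply exp_le_mono, Rlt_le, Hd|apply exp_le_3]).
  apply Rmult_le_compat_r; [left; apply Rinv_0_lt_compat, pow_lt|]; lra.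
Qed.

Lemma pow_ge_1_add_mul e y : 0 <= e -> 1 + INR y * e <= (1 + e) ^ y.
Proof.
  intros He; induction y; [simpl; lra|]; rewrite S_INR; cbn [pow].
  assert (0 <= INR y * e) by (apply Rmult_le_pos; auto; apply pos_INR); nra.
Qed.

(* Bernoulli's inequality applied to [z ^ (x/3)] gives a cubic lower bound. *)
Lemma pow_dominates_square z C : 1 < z ->
  exists X0, forall x, (X0 <= x)%nat -> C * INR x ^ 2 <= z ^ x.
Proof.
  intros Hz; set (e := z - 1); assert (He : 0 < e) by (unfold e; lra).
  destruct (nat_above (729 * Rmax C 0 / e ^ 3)) as [N HN].
  exists (Nat.max 3 N); intros x Hx.
  set (y := (x / 3)%nat).
  assert (Hy : (3 * y <= x /\ x < 3 * y + 3)%nat).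
  { unfold y; pose proof (Nat.div_mod x 3 ltac:(lia)).
    pose proof (Nat.mod_upper_bound x 3 ltac:(lia)); lia. }
  assert (H1 : z ^ (3 * y) <= z ^ x) by (apply Rle_pow; lia || lra).
  assert (H2 : (INR y * e) ^ 3 <= z ^ (3 * y)).
  { rewrite Nat.mul_comm, pow_mult; apply pow_incr; split.
    - apply Rmult_le_pos; [apply pos_INR|lra].
    - pose proof (pow_ge_1_add_mul e y (Rlt_le _ _ He)).
      replace (1 + e) with z in H by (unfold e; ring); lra. }
  assert (H3 : INR x <= 9 * INR y).
  { assert (INR x < 3 * INR y + 3).
    { replace 3 with (INR 3) by (simpl; ring); rewrite <- mult_INR, <- plus_INR; apply lt_INR; lia. }
    assert (1 <= INR y) by (apply (le_INR 1); lia); lra. }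
  assert (Hx0 : 0 <= INR x) by apply pos_INR.
  assert (He3 : 0 < e ^ 3) by (apply pow_lt; auto).
  assert (H4 : 729 * Rmax C 0 <= INR x * e ^ 3).
  { apply Rmult_le_reg_r with (/ e ^ 3); [apply Rinv_0_lt_compat; auto|].
    replace (INR x * e ^ 3 * / e ^ 3) with (INR x) by (field; lra).
    apply Rle_trans with (INR N); [exact HN|apply le_INR; lia]. }
  assert (H5 : C * INR x ^ 2 <= (INR x * e / 9) ^ 3).
  { replace ((INR x * e / 9) ^ 3) with (INR x ^ 2 * ((INR x * e ^ 3) / 729)) by (simpl; field).
    pose proof (Rmax_l C 0); assert (0 <= INR x ^ 2) by (apply pow_le; auto).
    apply Rle_trans with (Rmax C 0 * INR x ^ 2); [apply Rmult_le_compat_r; auto|].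
    rewrite Rmult_comm; apply Rmult_le_compat_l; auto; lra. }
  assert (H6 : (INR x * e / 9) ^ 3 <= (INR y * e) ^ 3).
  { apply pow_incr; split; [apply Rmult_le_pos; [apply Rmult_le_pos|]; lra|nra]. }
  lra.
Qed.

Lemma pow_one_add_le y n : 0 <= y -> INR n * y <= / 2 ->
  (1 + y) ^ n <= 1 + INR n * y + 2 * (INR n * y) ^ 2.
Proof.
  intros Hy Hny; destruct n as [|n]; [simpl; lra|].
  assert (Hy1 : y <= 1) by (rewrite S_INR in Hny; pose proof (pos_INR n); nra).
  set (t := INR (S n) * y) in *.
  assert (Ht0 : 0 <= t) by (apply Rmult_le_pos; auto; apply pos_INR).
  assert (Hb : 1 - t <= (1 - y) ^ S n).
  { pose proof (pow_ge_bernoulli (1 - y) (S n)); unfold t.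
    replace (1 - (1 - y)) with y in H by ring; apply H; lra. }
  assert (Hp : (1 + y) ^ S n * (1 - y) ^ S n <= 1).
  { rewrite <- Rpow_mult_distr; apply Rle_trans with (1 ^ S n); [|rewrite pow1; lra].
    apply pow_incr; split; nra. }
  assert (Hq : 0 <= (1 + y) ^ S n) by (apply pow_le; lra).
  assert (H1 : (1 + y) ^ S n * (1 - t) <= 1)
    by (eapply Rle_trans; [|apply Hp]; apply Rmult_le_compat_l; auto).
  assert (H2 : 1 <= (1 + t + 2 * t ^ 2) * (1 - t)) by nra.
  nra.
Qed.

(** * The bulk of the distribution below the current atom *)

Definition bulk_eta (j k : nat) : R := (/2) ^ j / (4 * INR (S k)).
Definition bulk_u (j k : nat) : R := 1 + bulk_eta j k.
Definition bulk_z (j k : nat) : R := bulk_u j k / (1 + bulk_eta j k * (1 - (/2) ^ j / 2)).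

Lemma bulk_eta_pos j k : 0 < bulk_eta j k.
Proof.
  apply Rdiv_lt_0_compat; [apply pow_lt; lra|].
  pose proof (lt_0_INR (S k) (Nat.lt_0_succ k)); lra.
Qed.

Lemma pow_half_le_1 j : 0 < (/2) ^ j <= 1.
Proof. split; [apply pow_lt; lra|rewrite <- (pow1 j); apply pow_incr; lra]. Qed.

Lemma bulk_z_gt_1 j k : 1 < bulk_z j k.
Proof.
  pose proof (bulk_eta_pos j k); pose proof (pow_half_le_1 j).
  unfold bulk_z, bulk_u; apply Rmult_lt_reg_r with (1 + bulk_eta j k * (1 - (/2) ^ j / 2)); [nra|].
  unfold Rdiv; rewrite Rmult_assoc, Rinv_l, Rmult_1_r by nra; nra.
Qed.

(* The atoms [K i <= k], [i < j], carry mean [1 - 2^-j].  For [u = 1 + eta] with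
   [eta * K i <= 2^-j / 4], [pow_one_add_le] bounds the generating function at [u] by
   [1 + eta * (1 - 2^-j / 2)], and [z] is chosen to make [u] a fixpoint. *)
Lemma bulk_fixpoint K j k : (forall i, (i < j)%nat -> (1 <= K i <= k)%nat) ->
  bulk_z j k * ((1 - lsum (atom K) (seq 0 j)) +
                lsum (fun i => atom K i * bulk_u j k ^ K i) (seq 0 j)) <= bulk_u j k.
Proof.
  intros HK; set (r := (/2) ^ j); set (eta := bulk_eta j k).
  assert (Hr : 0 < r <= 1) by apply pow_half_le_1.
  assert (Heta : 0 < eta) by apply bulk_eta_pos.
  assert (Hk : 0 < INR (S k)) by (apply lt_0_INR; lia).
  assert (Hsum : lsum (fun i => atom K i * bulk_u j k ^ K i) (seq 0 j) <=
                 lsum (atom K) (seq 0 j) + eta * (1 + r / 2) * lsum share (seq 0 j)).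
  { rewrite <- lsum_mult_l, <- lsum_plus; apply lsum_le; intros i Hi; apply in_seq in Hi.
    destruct (HK i ltac:(lia)) as [HKi1 HKi2].
    assert (HKi : 0 < INR (K i)) by (apply lt_0_INR; lia).
    assert (Hke : INR (K i) * eta <= r / 4).
    { unfold eta, bulk_eta; fold r.
      replace (INR (K i) * (r / (4 * INR (S k)))) with (r / 4 * (INR (K i) / INR (S k)))
        by (field; lra).
      rewrite <- (Rmult_1_r (r / 4)) at 2; apply Rmult_le_compat_l; [lra|].
      apply Rmult_le_reg_r with (INR (S k)); auto; unfold Rdiv.
      rewrite Rmult_assoc, Rinv_l, Rmult_1_l, Rmult_1_r by lra; apply le_INR; lia. }
    assert (Ha : 0 < atom K i) by (apply Rdiv_lt_0_compat; [apply share_pos|auto]).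
    assert (HaK : atom K i * INR (K i) = share i) by (unfold atom; field; lra).
    pose proof (share_pos i).
    eapply Rle_trans; [apply Rmult_le_compat_l;
      [lra|apply (pow_one_add_le eta (K i)); lra]|].
    replace (atom K i * (1 + INR (K i) * eta + 2 * (INR (K i) * eta) ^ 2))
      with (atom K i + share i * eta + 2 * share i * eta * (INR (K i) * eta))
      by (rewrite <- HaK; ring).
    assert (2 * share i * eta * (INR (K i) * eta) <= 2 * share i * eta * (r / 4))
      by (apply Rmult_le_compat_l; nra).
    lra. }
  rewrite lsum_share, Nat.add_0_l, pow_O in Hsum; fold r in Hsum.
  assert (Hg : (1 - lsum (atom K) (seq 0 j)) +
               lsum (fun i => atom K i * bulk_u j k ^ K i) (seq 0 j) <= 1 + eta * (1 - r / 2)).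
  { assert (eta * (1 + r / 2) * (1 - r) <= eta * (1 - r / 2))
      by (rewrite Rmult_assoc; apply Rmult_le_compat_l; nra).
    lra. }
  assert (Hz0 : 0 < bulk_z j k) by (pose proof (bulk_z_gt_1 j k); lra).
  eapply Rle_trans; [apply Rmult_le_compat_l; [lra|apply Hg]|].
  unfold bulk_z, bulk_u; fold eta r; right; field; nra.
Qed.

(** * Choice of the atoms *)

(* The requirements on the atom [x = K j], given the previous atom [k = K (j-1)]:
   it leaves a large gap after [k], the function [f] is large from [x] on, and [x]
   absorbs the polynomial factors of the estimates of stage [j]. *)
Definition next_ok (f : nat -> R) (j k x : nat) : Prop :=
  (4 * k * 2 ^ j + 2 <= x)%nat /\
  (forall n, (x <= n)%nat -> 8 / (/2) ^ S j < f n) /\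
  72 * INR (S j) / ((/2) ^ S j) ^ 2 <= INR x ^ 2 /\
  bulk_u j k * (24 * INR (S j) / ((/2) ^ S j) ^ 2) * INR x ^ 2 <= bulk_z j k ^ x.

Lemma next_ok_exists f : (forall M, exists N, forall n, (N <= n)%nat -> M < f n) ->
  forall j k, exists x, next_ok f j k x.
Proof.
  intros f_inf j k.
  destruct (f_inf (8 / (/2) ^ S j)) as [N1 HN1].
  destruct (nat_above (72 * INR (S j) / ((/2) ^ S j) ^ 2)) as [N2 HN2].
  destruct (pow_dominates_square (bulk_z j k) (bulk_u j k * (24 * INR (S j) / ((/2) ^ S j) ^ 2)))
    as [N3 HN3]; [apply bulk_z_gt_1|].
  exists (Nat.max (4 * k * 2 ^ j + 2) (Nat.max N1 (Nat.max (S N2) N3))).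
  set (x := Nat.max _ _).
  split; [lia|split; [intros n Hn; apply HN1; lia|split; [|apply HN3; lia]]].
  assert (1 <= INR x) by (apply (le_INR 1); lia).
  assert (INR N2 <= INR x) by (apply le_INR; lia).
  replace (INR x ^ 2) with (INR x * INR x) by ring; nra.
Qed.

Lemma next_choice f : (forall M, exists N, forall n, (N <= n)%nat -> M < f n) ->
  {next | forall j k, next_ok f j k (next j k)}.
Proof.
  intros f_inf.
  exists (fun j k => proj1_sig (constructive_indefinite_description _ (next_ok_exists f f_inf j k))).
  intros j k; apply proj2_sig.
Qed.

Fixpoint atoms (next : nat -> nat -> nat) (j : nat) : nat :=
  match j with O => next O O | S j => next (S j) (atoms next j) end.

Definition prev_atom (next : nat -> nat -> nat) (j : nat) : nat :=
  match j with O => O | S j => atoms next j end.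

Section Atoms.
Variables (f : nat -> R) (next : nat -> nat -> nat).
Hypothesis next_spec : forall j k, next_ok f j k (next j k).

Lemma atoms_ok j : next_ok f j (prev_atom next j) (atoms next j).
Proof. destruct j; apply next_spec. Qed.

Lemma atoms_0 : (2 <= atoms next 0)%nat.
Proof. destruct (atoms_ok 0) as [H _]; lia. Qed.

Lemma atoms_S j : (atoms next j < atoms next (S j))%nat.
Proof.
  destruct (atoms_ok (S j)) as [H _]; simpl prev_atom in H.
  pose proof (Nat.pow_nonzero 2 (S j)); nia.
Qed.

Lemma atoms_le_prev i j : (i < j)%nat -> (atoms next i <= prev_atom next j)%nat.
Proof.
  destruct j as [|j]; [lia|simpl; intros Hij].
  destruct (Nat.eq_dec i j) as [->|]; [lia|].
  pose proof (K_lt (atoms next) atoms_0 atoms_S i j); lia.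
Qed.

End Atoms.

(** * Stage [j] *)

Section Stage.
Variables (f : nat -> R) (K : nat -> nat) (A : R) (j kp : nat).
Hypothesis f_pos : forall n, 0 < f n.
Hypothesis K_0 : (2 <= K 0)%nat.
Hypothesis K_S : forall i, (K i < K (S i))%nat.
Hypothesis A_lim : Un_cv (fun N => sum_f_R0 (atom K) N) A.
Hypothesis K_j_ok : next_ok f j kp (K j).
Hypothesis K_Sj_gap : (4 * K j * 2 ^ S j + 2 <= K (S j))%nat.
Hypothesis K_prefix_le : forall i, (i < j)%nat -> (K i <= kp)%nat.

Let mu := offspring K A.
Let d := (/2) ^ S j.
Let M := S (4 * K j * 2 ^ S j).
Let L := d ^ 2 / (24 * INR (K j) ^ 2).

Let d_bounds : 0 < d < 1.
Proof. pose proof (pow_half_le_1 j); unfold d; simpl; lra. Qed.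

Let K_j_ge_2 : (2 <= K j)%nat.
Proof. pose proof (K_ge K K_0 K_S j); lia. Qed.

Let INR_M : INR M = 4 * INR (K j) / d + 1.
Proof.
  unfold M, d; rewrite S_INR, !mult_INR, pow_INR, pow_inv.
  replace (INR 4) with 4 by (simpl; ring); replace (INR 2) with 2 by reflexivity.
  field; apply pow_nonzero; lra.
Qed.

Let mu_nonneg k : 0 <= mu k.
Proof. apply offspring_nonneg; auto. Qed.

Let mass_le_1 D : lsum mu (seq 0 D) <= 1.
Proof. apply offspring_mass_le_1; auto. Qed.

Lemma stage_window_mean D : (K j < D <= K (S j))%nat ->
  lsum (fun l => INR l * mu l) (seq 0 D) = 1 - d.
Proof.
  intros HD; apply offspring_mean_trunc; auto; [lia|intros i; split; intros Hi].
  - destruct (le_lt_dec i j) as [|Hji]; [lia|].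
    destruct (Nat.eq_dec i (S j)) as [->|]; [lia|pose proof (K_lt K K_0 K_S (S j) i); lia].
  - destruct (Nat.eq_dec i j) as [->|]; [lia|pose proof (K_lt K K_0 K_S i j); lia].
Qed.

Lemma stage_btrees_mass_large : exists H, / 2 <= lsum (weight mu) (btrees (K (S j)) H) ^ K j.
Proof.
  set (D := K (S j)).
  assert (HKD : (K j < D)%nat) by apply K_S.
  assert (HD : 0 < INR D) by (apply lt_0_INR; lia).
  set (s := A - lsum (atom K) (seq 0 (S j))).
  assert (Hs : 0 <= s <= d / INR D).
  { split; [unfold s; pose proof (lsum_atom_le_A K A K_0 K_S A_lim (S j)); lra|].
    apply A_sub_lsum_atom_le; auto. }
  assert (Hmass : 1 - s <= lsum mu (seq 0 D)).
  { unfold mu, s; rewrite (offspring_mass_trunc K A K_0 K_S D (S j)); [lra| |];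
      [lia|intros i; apply K_lt_iff; auto]. }
  destruct (pow_lt_1_zero (1 - d) ltac:(rewrite Rabs_pos_eq; lra) (/ INR D)
    ltac:(apply Rinv_0_lt_compat; auto)) as [H HH].
  specialize (HH H (le_n _)); rewrite Rabs_pos_eq in HH by (apply pow_le; lra).
  exists H; set (U := lsum (weight mu) (btrees D H)).
  assert (HU1 : U <= 1) by (apply btrees_mass_le_1; auto; lia).
  assert (HU0 : 0 <= U) by (apply lsum_nonneg; intros; apply weight_nonneg; auto).
  assert (HUl : 1 - U <= 2 / INR D).
  { pose proof (btrees_mass_ge mu D mu_nonneg ltac:(lia) (mass_le_1 D) (1 - d)
      ltac:(lra) (Req_le _ _ (stage_window_mean D ltac:(lia))) ltac:(lra)
      s (proj1 Hs) Hmass H) as Hl; fold U in Hl.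
    replace (1 - (1 - d)) with d in Hl by ring.
    assert (s / d <= / INR D).
    { apply Rmult_le_reg_r with d; [lra|]; unfold Rdiv in *.
      rewrite Rmult_assoc, Rinv_l, Rmult_1_r by lra; lra. }
    unfold Rdiv; lra. }
  assert (H4K : 4 * INR (K j) <= INR D).
  { replace 4 with (INR 4) by (simpl; ring); rewrite <- mult_INR; apply le_INR.
    pose proof (Nat.pow_nonzero 2 (S j)); unfold D; nia. }
  pose proof (pow_ge_bernoulli U (K j) (conj HU0 HU1)).
  assert (INR (K j) * (1 - U) <= / 2).
  { apply Rle_trans with (INR (K j) * (2 / INR D)); [apply Rmult_le_compat_l; [apply pos_INR|lra]|].
    apply Rmult_le_reg_r with (INR D); auto; unfold Rdiv; field_simplify; lra. }
  lra.
Qed.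

Lemma stage_Psize_lower :
  exists n, (K j < n <= M)%nat /\ L <= Defs.Psize mu n.
Proof.
  destruct stage_btrees_mass_large as [H HU].
  set (D := K (S j)) in HU; set (U := lsum (weight mu) (btrees D H)) in HU.
  pose proof INR_M as HMK; set (Kj := INR (K j)) in *.
  assert (HKj : 2 <= Kj) by (apply (le_INR 2); auto).
  assert (HM : 0 < INR M) by (rewrite HMK; apply Rplus_lt_0_compat; [|lra];
    apply Rdiv_lt_0_compat; lra).
  assert (HmuK : mu (K j) = d / Kj).
  { unfold mu; rewrite offspring_K by auto; reflexivity. }
  assert (HKM : Kj / ((1 - (1 - d)) * INR M) <= / 4).
  { rewrite HMK; replace (1 - (1 - d)) with d by ring.
    replace (d * (4 * Kj / d + 1)) with (4 * Kj + d) by (field; lra).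
    apply Rmult_le_reg_r with (4 * Kj + d); [lra|].
    unfold Rdiv; rewrite Rmult_assoc, Rinv_l, Rmult_1_r by lra; lra. }
  assert (HT : d / Kj / 4 <= mu (K j) * (U ^ K j - Kj / ((1 - (1 - d)) * INR M))).
  { rewrite HmuK; unfold Rdiv at 2; apply Rmult_le_compat_l;
      [apply Rlt_le, Rdiv_lt_0_compat|]; lra. }
  assert (HT0 : 0 < d / Kj / 4) by (apply Rdiv_lt_0_compat; [apply Rdiv_lt_0_compat|]; lra).
  destruct (Psize_lower_bound mu D H (K j) M (1 - d) ltac:(pose proof (K_S j); lia)
    mu_nonneg ltac:(lra) ltac:(unfold M; lia) (mass_le_1 D)
    (Req_le _ _ (stage_window_mean D ltac:(pose proof (K_S j); lia))) (Rlt_le_trans _ _ _ HT0 HT))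
    as [n [Hn HPn]].
  exists n; split; [exact Hn|]; eapply Rle_trans; [|exact HPn].
  apply Rle_trans with (d / Kj / 4 / INR M); [|apply Rmult_le_compat_r; [|exact HT]];
    [|left; apply Rinv_0_lt_compat; auto].
  assert (INR M <= 6 * Kj / d).
  { rewrite HMK; enough (1 <= 2 * Kj / d) by (unfold Rdiv in *; lra).
    apply Rmult_le_reg_r with d; [lra|]; unfold Rdiv.
    rewrite Rmult_assoc, Rinv_l, Rmult_1_r by lra; lra. }
  unfold L; fold Kj; apply Rle_trans with (d / Kj / 4 / (6 * Kj / d)).
  - right; field; lra.
  - unfold Rdiv at 4 5; apply Rmult_le_compat_l; [lra|].
    apply Rinv_le_contravar; auto.
Qed.

Lemma stage_height_tail n : (K j < n <= K (S j))%nat ->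
  lsum (fun t => if excluded_middle_informative (INR (height t) < f n * ln (INR n))
                 then 0 else weight mu t) (trees n) <= 3 / INR n ^ 4.
Proof.
  intros Hn; destruct K_j_ok as [_ [Hf _]].
  assert (Hfn : 8 / d < f n) by (apply Hf; lia).
  assert (Hx : 0 <= f n * ln (INR n))
    by (apply Rmult_le_pos; [left; auto|apply ln_INR_nonneg; lia]).
  destruct (floor_nat _ Hx) as [h [Hh1 Hh2]].
  apply Rle_trans with (lsum (fun t => if le_dec h (height t) then weight mu t else 0) (trees n)).
  - apply lsum_le; intros t _.
    destruct (excluded_middle_informative _) as [|Hbad]; destruct (le_dec h (height t)) as [|Hlt];
      try (apply weight_nonneg; auto); try lra.
    exfalso; apply Hbad, Rlt_le_trans with (INR h); [apply lt_INR; lia|lra].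
  - eapply Rle_trans.
    + apply trees_height_tail with (m := 1 - d); auto; [lia|lra|].
      right; apply stage_window_mean; auto.
    + apply pow_one_sub_le_inv_pow4 with (f n); auto; [lia|].
      apply Rle_trans with (8 / d); [|lra].
      unfold Rdiv; apply Rmult_le_compat_r; [left; apply Rinv_0_lt_compat|]; lra.
Qed.

(* Below [n / f n < K j] the width forces all outdegrees below [K j], where only the
   atoms [K i], [i < j], and the mass at 0 are available: such trees are exponentially
   rare by the generating-function bound at the bulk fixpoint. *)
Lemma stage_width_tail n : (K j < n <= M)%nat ->
  lsum (fun t => if excluded_middle_informative (INR n / f n < INR (width t))
                 then 0 else weight mu t) (trees n) * bulk_z j kp ^ n <= bulk_u j kp.
Proof.
  intros Hn; destruct K_j_ok as [_ [Hf _]].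
  assert (Hfn : 8 / d < f n) by (apply Hf; lia).
  assert (Hratio : INR n / f n < INR (K j)).
  { pose proof (f_pos n); apply Rmult_lt_reg_r with (f n); auto.
    unfold Rdiv; rewrite Rmult_assoc, Rinv_l, Rmult_1_r by lra.
    assert (HnM : INR n <= INR M) by (apply le_INR; lia); rewrite INR_M in HnM.
    assert (HK2 : 2 <= INR (K j)) by (apply (le_INR 2); auto).
    assert (INR (K j) * (8 / d) < INR (K j) * f n) by (apply Rmult_lt_compat_l; lra).
    assert (4 * INR (K j) / d + 1 < INR (K j) * (8 / d)).
    { unfold Rdiv; assert (1 < / d) by (rewrite <- Rinv_1; apply Rinv_lt_contravar; lra).
      assert (2 <= INR (K j) * / d) by nra; nra. }
    lra. }
  assert (Hz : 0 < bulk_z j kp) by (pose proof (bulk_z_gt_1 j kp); lra).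
  assert (Hu : 0 <= bulk_u j kp) by (pose proof (bulk_eta_pos j kp); unfold bulk_u; lra).
  assert (Hfix : bulk_z j kp * lsum (fun l => mu l * bulk_u j kp ^ l) (seq 0 (K j))
                 <= bulk_u j kp).
  { eapply Rle_trans; [|apply (bulk_fixpoint K j kp)].
    - apply Rmult_le_compat_l; [lra|].
      unfold mu; rewrite (lsum_offspring_mult K A K_0 K_S _ (K j) j), pow_O by
        (lia || (intros i; apply K_lt_iff; auto)).
      pose proof (lsum_atom_le_A K A K_0 K_S A_lim j); lra.
    - intros i Hi; split; [pose proof (K_ge K K_0 K_S i); lia|auto]. }
  eapply Rle_trans; [|apply (trees_small_outdeg_le mu n (K j) _ _ ltac:(lia) mu_nonneg Hz Hu Hfix)].
  apply Rmult_le_compat_r; [apply pow_le; lra|]; apply lsum_le; intros t _.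
  destruct (excluded_middle_informative _) as [|Hbad], (lt_dec (max_outdeg t) (K j)) as [|Hge];
    try (apply weight_nonneg; auto); try lra.
  exfalso; apply Hge; apply INR_lt; pose proof (le_INR _ _ (max_outdeg_le_width t)); lra.
Qed.

Let L_pos : 0 < L.
Proof.
  apply Rdiv_lt_0_compat; [apply pow_lt; lra|].
  apply Rmult_lt_0_compat; [lra|apply pow_lt, (lt_INR 0); lia].
Qed.

Lemma stage_height_bad n : (K j < n <= M)%nat ->
  lsum (fun t => if excluded_middle_informative (INR (height t) < f n * ln (INR n))
                 then 0 else weight mu t) (trees n) <= L / INR (S j).
Proof.
  intros Hn; destruct K_j_ok as [_ [_ [HKj _]]]; fold d in HKj.
  assert (HK : 2 <= INR (K j)) by (apply (le_INR 2); auto).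
  assert (HK4 : 0 < INR (K j) ^ 4) by (apply pow_lt; lra).
  assert (HSj : 0 < INR (S j)) by (apply lt_0_INR; lia).
  eapply Rle_trans; [apply stage_height_tail; unfold M in Hn; lia|].
  apply Rle_trans with (3 / INR (K j) ^ 4).
  { unfold Rdiv; apply Rmult_le_compat_l; [lra|apply Rinv_le_contravar; auto].
    apply pow_incr; split; [lra|apply le_INR; lia]. }
  assert (72 * INR (S j) <= INR (K j) ^ 2 * d ^ 2).
  { apply Rmult_le_reg_r with (/ d ^ 2); [apply Rinv_0_lt_compat, pow_lt; lra|].
    replace (INR (K j) ^ 2 * d ^ 2 * / d ^ 2) with (INR (K j) ^ 2) by (field; lra).
    unfold Rdiv in HKj; lra. }
  unfold L; apply Rmult_le_reg_r with (24 * INR (K j) ^ 4 * INR (S j)); [nra|].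
  replace (3 / INR (K j) ^ 4 * (24 * INR (K j) ^ 4 * INR (S j))) with (72 * INR (S j))
    by (field; lra).
  replace (d ^ 2 / (24 * INR (K j) ^ 2) / INR (S j) * (24 * INR (K j) ^ 4 * INR (S j)))
    with (INR (K j) ^ 2 * d ^ 2) by (field; lra).
  lra.
Qed.

Lemma stage_width_bad n : (K j < n <= M)%nat ->
  lsum (fun t => if excluded_middle_informative (INR n / f n < INR (width t))
                 then 0 else weight mu t) (trees n) <= L / INR (S j).
Proof.
  intros Hn; destruct K_j_ok as [_ [_ [_ Hdom]]]; fold d in Hdom.
  pose proof (stage_width_tail n Hn) as Hw.
  set (z := bulk_z j kp) in *; set (u := bulk_u j kp) in *.
  set (W := lsum _ (trees n)) in *.
  assert (Hz : 1 < z) by apply bulk_z_gt_1.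
  assert (Hzk : 0 < z ^ K j) by (apply pow_lt; lra).
  assert (HW0 : 0 <= W).
  { apply lsum_nonneg; intros t _; destruct (excluded_middle_informative _);
      [lra|apply weight_nonneg; auto]. }
  assert (HKj : 0 < INR (K j)) by (apply (lt_INR 0); lia).
  assert (HSj : 0 < INR (S j)) by (apply lt_0_INR; lia).
  apply Rmult_le_reg_r with (z ^ K j); auto.
  apply Rle_trans with u.
  { eapply Rle_trans; [|apply Hw]; apply Rmult_le_compat_l; auto; apply Rle_pow; lra || lia. }
  unfold L; apply Rmult_le_reg_r with (24 * INR (S j) / d ^ 2 * INR (K j) ^ 2);
    [apply Rmult_lt_0_compat; [apply Rdiv_lt_0_compat|]; try apply pow_lt; lra|].
  replace (d ^ 2 / (24 * INR (K j) ^ 2) / INR (S j) * z ^ K j *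
    (24 * INR (S j) / d ^ 2 * INR (K j) ^ 2)) with (z ^ K j)
    by (field; repeat split; try apply pow_nonzero; lra).
  rewrite <- Rmult_assoc; exact Hdom.
Qed.

Lemma stage : exists n, (K j < n)%nat /\ 0 < Defs.Psize mu n /\
  1 - / INR (S j) <= Pcond mu n (fun t => INR (height t) < f n * ln (INR n)) /\
  1 - / INR (S j) <= Pcond mu n (fun t => INR n / f n < INR (width t)).
Proof.
  destruct stage_Psize_lower as [n [Hn HP]].
  assert (HSj : 0 < INR (S j)) by (apply lt_0_INR; lia).
  assert (Hbad : forall B, B <= L / INR (S j) -> B <= / INR (S j) * Defs.Psize mu n).
  { intros B HB; eapply Rle_trans; [apply HB|]; unfold Rdiv; rewrite Rmult_comm.
    apply Rmult_le_compat_l; [left; apply Rinv_0_lt_compat|]; lra. }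
  exists n; split; [lia|split; [lra|split; apply Pcond_ge; try lra; apply Hbad]].
  - apply stage_height_bad; auto.
  - apply stage_width_bad; auto.
Qed.

End Stage.

Lemma limsup_one_intro mu (P : nat -> ptree -> Prop) :
  (forall j, exists n, (j <= n)%nat /\ 0 < Defs.Psize mu n /\
                       1 - / INR (S j) <= Pcond mu n (P n)) ->
  limsup_one mu P.
Proof.
  intros Hstage; split.
  - intros N; destruct (Hstage N) as [n [Hn [HP _]]]; eauto.
  - intros eps Heps N; destruct (nat_above (/ eps)) as [J HJ].
    destruct (Hstage (Nat.max N J)) as [n [Hn [HP HPc]]].
    exists n; split; [lia|split; [auto|]].
    enough (/ INR (S (Nat.max N J)) < eps) by lra.
    assert (HJ' : INR J < INR (S (Nat.max N J))) by (apply lt_INR; lia).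
    rewrite <- (Rinv_inv eps); apply Rinv_lt_contravar; [|lra].
    apply Rmult_lt_0_compat; [apply Rinv_0_lt_compat; auto|apply lt_0_INR; lia].
Qed.

Theorem theorem2 (f : nat -> R)
  (f_pos : forall n, 0 < f n)
  (f_inf : forall M, exists N, forall n, (N <= n)%nat -> M < f n) :
  exists mu : nat -> R,
    critical_offspring mu /\
    limsup_one mu (fun n t => INR (height t) < f n * ln (INR n)) /\
    limsup_one mu (fun n t => INR n / f n < INR (width t)).
Proof.
  destruct (next_choice f f_inf) as [next next_spec].
  set (K := atoms next).
  pose proof (atoms_0 f next next_spec) as K_0.
  pose proof (atoms_S f next next_spec) as K_S.
  destruct (atom_series_cv K K_0 K_S) as [A A_lim].
  assert (Hstage : forall j, exists n, (j <= n)%nat /\ 0 < Defs.Psize (offspring K A) n /\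
    1 - / INR (S j) <= Pcond (offspring K A) n (fun t => INR (height t) < f n * ln (INR n)) /\
    1 - / INR (S j) <= Pcond (offspring K A) n (fun t => INR n / f n < INR (width t))).
  { intros j; destruct (stage f K A j (prev_atom next j) f_pos K_0 K_S A_lim
      (atoms_ok f next next_spec j) (proj1 (atoms_ok f next next_spec (S j)))
      (fun i => atoms_le_prev f next next_spec i j)) as [n [Hn Hrest]].
    exists n; split; [pose proof (K_ge K K_0 K_S j); lia|exact Hrest]. }
  exists (offspring K A); split; [apply critical_offspring_intro; auto|split];
    apply limsup_one_intro; intros j; destruct (Hstage j) as [n [? [? [? ?]]]]; eauto.
Qed.
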